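(* In the setting of the context, fix $\varrho>0$. For $\kappa>0$ big enough there exists a constant $C>0$ independent of $\kappa$ such that, for any $Z\in B(\varrho)$, $$\|\mathcal R_1[Z]\|_{11/3}\le C,\qquad\|\mathcal R_j[Z]\|_{4/3}\le C,\ j=2,3,$$ and $$\|\partial_W\mathcal R_1[Z]\|_3\le C,\quad\|\partial_X\mathcal R_1[Z]\|_{7/3}\le C,\quad\|\partial_Y\mathcal R_1[Z]\|_{7/3}\le C,$$ $$\|\partial_W\mathcal R_j[Z]\|_{2/3}\le C,\quad\|\partial_X\mathcal R_j[Z]\|_2\le C,\quad\|\partial_Y\mathcal R_j[Z]\|_2\le C,\quad j=2,3.$$
   Context: Inner equation: $\mathcal K=-\tfrac34U^{2/3}W^2-\frac1{3U^{2/3}}\big((1+\mathcal J)^{-1/2}-1\big)$ with $\mathcal J=\frac{4W^2}{9U^{2/3}}-\frac{16W}{27U^{4/3}}+\frac{16}{81U^2}+\frac{4(X+Y)}{9U}\big(W-\frac2{3U^{2/3}}\big)-\frac{4i(X-Y)}{3U^{2/3}}-\frac{X^2+Y^2}{3U^{4/3}}+\frac{10XY}{9U^{4/3}}$; $Z=(W,X,Y)$, $\mathcal A=\mathrm{diag}(0,i,-i)$, $f=(-\partial_U\mathcal K,i\partial_Y\mathcal K,-i\partial_X\mathcal K)^T$, $g=\partial_W\mathcal K$. For $U$ and $\zeta=(W,X,Y)$ let $\mathcal R(U,\zeta)=\frac{f(U,\zeta)-g(U,\zeta)\mathcal A\zeta}{1+g(U,\zeta)}$; for a function $\varphi$ of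 $U$, $\mathcal R[\varphi](U)=\mathcal R(U,\varphi(U))$ and $\partial_W\mathcal R_j[\varphi](U)=(\partial_W\mathcal R_j)(U,\varphi(U))$, and similarly for $X,Y$. Fix $\beta_0\in(0,\tfrac\pi2)$; $D^u_\kappa=\{U\in\mathbb C:|\operatorname{Im}U|\ge\tan\beta_0\operatorname{Re}U+\kappa\}$, with fractional powers of $U$ given by a continuous determination of $\arg U$ on $D^u_\kappa$ with $\arg U\in(-\pi,0)$ for $\operatorname{Im}U<0$. $\|\varphi\|_\nu=\sup_{U\in D^u_\kappa}|U^\nu\varphi(U)|$, $\mathcal X_\nu$ the space of analytic $\varphi$ on $D^u_\kappa$ with $\|\varphi\|_\nu<\infty$, $\|\varphi\|_\times=\|\varphi_1\|_{8/3}+\|\varphi_2\|_{4/3}+\|\varphi_3\|_{4/3}$, and $B(\varrho)=\{\varphi\in\mathcal X_{8/3}\times\mathcal X_{4/3}\times\mathcal X_{4/3}:\|\varphi\|_\times\le\varrho\}$. *)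

From Stdlib Require Import Reals ClassicalEpsilon.
From Coquelicot Require Import Coquelicot.
Open Scope R_scope.

(* The continuous determination of arg U on D^u_kappa (which avoids [0,+oo))
   with arg U in (-pi,0) when Im U < 0; it takes values in (-2pi,0). *)
Definition argD (U : C) : R :=
  if Rlt_dec (Im U) 0 then - acos (Re U / Cmod U)
  else acos (Re U / Cmod U) - 2 * PI.

Definition cpowD (U : C) (nu : R) : C :=
  (RtoC (Rpower (Cmod U) nu) * (RtoC (cos (nu * argD U)) + Ci * RtoC (sin (nu * argD U))))%C.

(* principal argument in (-pi, pi] and principal power (used for (1+J)^{-1/2}) *)
Definition argP (w : C) : R :=
  if Rlt_dec (Im w) 0 then - acos (Re w / Cmod w) else acos (Re w / Cmod w).

Definition cpowP (w : C) (nu : R) : C :=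
  (RtoC (Rpower (Cmod w) nu) * (RtoC (cos (nu * argP w)) + Ci * RtoC (sin (nu * argP w))))%C.

(* the complex derivative of f at z (a chosen value l with is_derive f z l;
   arbitrary if f is not complex differentiable at z) *)
Definition Cderiv (f : C -> C) (z : C) : C :=
  epsilon (inhabits (RtoC 0)) (fun l : C => @is_derive C_AbsRing C_NormedModule f z l).

Definition Holo_at (f : C -> C) (z : C) : Prop :=
  @ex_derive C_AbsRing C_NormedModule f z.

Definition dU (F : C -> C -> C -> C -> C) U W X Y := Cderiv (fun u => F u W X Y) U.
Definition dW (F : C -> C -> C -> C -> C) U W X Y := Cderiv (fun w => F U w X Y) W.
Definition dX (F : C -> C -> C -> C -> C) U W X Y := Cderiv (fun x => F U W x Y) X.
Definition dY (F : C -> C -> C -> C -> C) U W X Y := Cderiv (fun y => F U W X y) Y.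

Local Open Scope C_scope.

Definition Jfun (U W X Y : C) : C :=
  RtoC (4/9) * W * W / cpowD U (2/3)
  - RtoC (16/27) * W / cpowD U (4/3)
  + RtoC (16/81) / (U * U)
  + RtoC (4/9) * (X + Y) / U * (W - RtoC (2/3) / cpowD U (2/3))
  - RtoC 4 * Ci * (X - Y) / (RtoC 3 * cpowD U (2/3))
  - (X * X + Y * Y) / (RtoC 3 * cpowD U (4/3))
  + RtoC (10/9) * X * Y / cpowD U (4/3).

Definition Kfun (U W X Y : C) : C :=
  - RtoC (3/4) * cpowD U (2/3) * W * W
  - RtoC 1 / (RtoC 3 * cpowD U (2/3))
      * (cpowP (RtoC 1 + Jfun U W X Y) (-1/2) - RtoC 1).

(* f = (-dU K, i dY K, -i dX K), g = dW K *)
Definition gfun (U W X Y : C) : C := dW Kfun U W X Y.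

(* components of R(U, zeta) with zeta = (W,X,Y), A = diag(0,i,-i) *)
Definition Rc1 (U W X Y : C) : C :=
  (- dU Kfun U W X Y - gfun U W X Y * RtoC 0) / (RtoC 1 + gfun U W X Y).
Definition Rc2 (U W X Y : C) : C :=
  (Ci * dY Kfun U W X Y - gfun U W X Y * (Ci * X)) / (RtoC 1 + gfun U W X Y).
Definition Rc3 (U W X Y : C) : C :=
  (- Ci * dX Kfun U W X Y - gfun U W X Y * (- Ci * Y)) / (RtoC 1 + gfun U W X Y).

Local Close Scope C_scope.

Definition inD (beta0 kappa : R) (U : C) : Prop :=
  Rabs (Im U) >= tan beta0 * Re U + kappa.

Definition wnorm (beta0 kappa nu : R) (phi : C -> C) : Rbar :=
  Lub_Rbar (fun r => exists U, inD beta0 kappa U /\ r = Cmod (cpowD U nu * phi U)%C).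

Definition in_Xnu (beta0 kappa nu : R) (phi : C -> C) : Prop :=
  (forall U, inD beta0 kappa U -> Holo_at phi U) /\ is_finite (wnorm beta0 kappa nu phi).

Definition in_ball (beta0 kappa rho : R) (Z1 Z2 Z3 : C -> C) : Prop :=
  in_Xnu beta0 kappa (8/3) Z1 /\ in_Xnu beta0 kappa (4/3) Z2 /\ in_Xnu beta0 kappa (4/3) Z3 /\
  real (wnorm beta0 kappa (8/3) Z1) + real (wnorm beta0 kappa (4/3) Z2)
    + real (wnorm beta0 kappa (4/3) Z3) <= rho.

Definition eval_on (F : C -> C -> C -> C -> C) (Z1 Z2 Z3 : C -> C) : C -> C :=
  fun U => F U (Z1 U) (Z2 U) (Z3 U).

(* On [D^u_kappa] every quantity is graded by a power of [T = |U|^(1/3)]: for [Z] in [B(rho)],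
   [W = O(T^-8)] and [X, Y = O(T^-4)], hence [J = O(T^-6)] and [dK/dW = O(T^-6)]. For [kappa]
   large both have modulus at most [1/2], so [(1 + J)^(-1/2)] and [1 / (1 + dK/dW)] stay bounded.
   The components of [R] and their partial derivatives are explicit expressions in [U^(1/3)],
   [W], [X], [Y] and [(1 + J)^(-1/2)], whose orders in [T] are read off term by term and turned
   back into the weighted norms. These expressions are justified by the holomorphy of [U^(1/3)]
   off the slit [0, +oo) and of [w^(-1/2)] on [Re w > 0], both obtained from Caratheodory's
   criterion. *)

From Stdlib Require Import Reals ClassicalEpsilon Lra ZArith Lia.
From Coquelicot Require Import Coquelicot.
Open Scope R_scope.

(** * Complex differentiation *)

Local Open Scope C_scope.

Definition Ccontinuous_at (f : C -> C) (x : C) : Prop :=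
  forall eps : R, 0 < eps -> exists del : R, 0 < del /\
    forall y, Cmod (y - x) < del -> Cmod (f y - f x) < eps.

Lemma Cmod_minus_sym (a b : C) : Cmod (a - b) = Cmod (b - a).
Proof. replace (a - b) with (- (b - a)) by ring. apply Cmod_opp. Qed.

(* Coquelicot's rules for products and compositions are stated for
   [AbsRing_NormedModule C_AbsRing], [Cderiv] uses [C_NormedModule]. *)
Lemma is_derive_C_to_AbsRing (f : C -> C) x l :
  @is_derive C_AbsRing C_NormedModule f x l ->
  @is_derive C_AbsRing (AbsRing_NormedModule C_AbsRing) f x l.
Proof. intros [_ H]. split; [apply is_linear_scal_l | exact H]. Qed.

Lemma is_derive_AbsRing_to_C (f : C -> C) x l :
  @is_derive C_AbsRing (AbsRing_NormedModule C_AbsRing) f x l ->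
  @is_derive C_AbsRing C_NormedModule f x l.
Proof. intros [_ H]. split; [apply is_linear_scal_l | exact H]. Qed.

Lemma is_derive_Cplus (f g : C -> C) x a b : is_derive f x a -> is_derive g x b ->
  is_derive (fun t => f t + g t) x (a + b).
Proof. apply (@is_derive_plus C_AbsRing C_NormedModule). Qed.

Lemma is_derive_Cminus (f g : C -> C) x a b : is_derive f x a -> is_derive g x b ->
  is_derive (fun t => f t - g t) x (a - b).
Proof. apply (@is_derive_minus C_AbsRing C_NormedModule). Qed.

Lemma is_derive_Copp (f : C -> C) x a : is_derive f x a -> is_derive (fun t => - f t) x (- a).
Proof. apply (@is_derive_opp C_AbsRing C_NormedModule). Qed.

Lemma is_derive_Cmult (f g : C -> C) x a b : is_derive f x a -> is_derive g x b ->
  is_derive (fun t => f t * g t) x (a * g x + f x * b).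
Proof.
  intros Hf Hg. apply is_derive_AbsRing_to_C.
  apply (@is_derive_mult C_AbsRing); [apply is_derive_C_to_AbsRing ..| exact Cmult_comm]; assumption.
Qed.

Lemma is_derive_Cconst (c : C) x : is_derive (fun _ => c) x (RtoC 0).
Proof. apply (@is_derive_const C_AbsRing C_NormedModule). Qed.

Lemma is_derive_Cid x : is_derive (fun t : C => t) x (RtoC 1).
Proof. apply is_derive_AbsRing_to_C, (@is_derive_id C_AbsRing). Qed.

Lemma is_derive_Ccomp (f g : C -> C) x a b : is_derive f (g x) a -> is_derive g x b ->
  is_derive (fun t => f (g t)) x (b * a).
Proof.
  intros Hf Hg. apply is_derive_AbsRing_to_C.
  apply (@is_derive_comp C_AbsRing (AbsRing_NormedModule C_AbsRing));
    apply is_derive_C_to_AbsRing; assumption.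
Qed.

Lemma is_derive_eq_val (f : C -> C) (x l1 l2 : C) : is_derive f x l1 -> l1 = l2 -> is_derive f x l2.
Proof. intros H <-. exact H. Qed.

Lemma Ccontinuous_at_is_derive (g : C -> C) (z l : C) : is_derive g z l -> Ccontinuous_at g z.
Proof.
  intros [_ H]. specialize (H z (fun P HP => HP)).
  destruct (H (mkposreal 1 Rlt_0_1)) as [e0 He0].
  intros eps Heps.
  assert (Hl : (0 < 1 + Cmod l)%R) by (generalize (Cmod_ge_0 l); lra).
  exists (Rmin e0 (eps / (1 + Cmod l))). split.
  { apply Rmin_case. apply cond_pos. apply Rdiv_lt_0_compat; lra. }
  intros y Hy.
  assert (Hy1 : Cmod (y - z) < e0) by (eapply Rlt_le_trans; [apply Hy| apply Rmin_l]).
  assert (Hy2 : Cmod (y - z) < eps / (1 + Cmod l)) by (eapply Rlt_le_trans; [apply Hy| apply Rmin_r]).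
  specialize (He0 y Hy1). change (Cmod ((g y - g z) - (y - z) * l) <= 1 * Cmod (y - z)) in He0.
  replace (g y - g z) with (((g y - g z) - (y - z) * l) + (y - z) * l) by ring.
  eapply Rle_lt_trans. apply Cmod_triangle. rewrite Cmod_mult.
  apply Rlt_div_r in Hy2; [|lra].
  generalize (Cmod_ge_0 l) (Cmod_ge_0 (y - z)); nra.
Qed.

Lemma is_derive_Caratheodory (f q : C -> C) (x : C) (d : R) : (0 < d)%R ->
  (forall y, Cmod (y - x) < d -> f y - f x = (y - x) * q y) ->
  Ccontinuous_at q x -> is_derive f x (q x).
Proof.
  intros Hd Hf Hq. split. apply is_linear_scal_l.
  intros x0 Hx0.
  apply (@is_filter_lim_locally_unique C_AbsRing (AbsRing_NormedModule C_AbsRing)) in Hx0. subst x0.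
  intros eps. destruct (Hq eps (cond_pos eps)) as [del [Hdel Hy]].
  assert (Hm : (0 < Rmin d del)%R) by (apply Rmin_case; lra).
  exists (mkposreal _ Hm). intros y Hy'. change (Cmod (y - x) < Rmin d del) in Hy'.
  change (Cmod ((f y - f x) - (y - x) * q x) <= eps * Cmod (y - x)).
  rewrite Hf by (eapply Rlt_le_trans; [apply Hy' | apply Rmin_l]).
  replace ((y - x) * q y - (y - x) * q x) with ((y - x) * (q y - q x)) by ring.
  rewrite Cmod_mult, Rmult_comm. apply Rmult_le_compat_r. apply Cmod_ge_0.
  left. apply Hy. eapply Rlt_le_trans. apply Hy'. apply Rmin_r.
Qed.

Lemma Ccontinuous_at_Cinv (x : C) : x <> 0 -> Ccontinuous_at Cinv x.
Proof.
  intros Hx eps Heps. apply Cmod_gt_0 in Hx as Hm.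
  exists (Rmin (Cmod x / 2) (eps * (Cmod x * Cmod x) / 2)). split.
  { apply Rmin_case. lra. apply Rdiv_lt_0_compat; [|lra]. apply Rmult_lt_0_compat; [lra|]. apply Rmult_lt_0_compat; lra. }
  intros y Hy.
  assert (Hy1 : Cmod (y - x) < Cmod x / 2) by (eapply Rlt_le_trans; [apply Hy| apply Rmin_l]).
  assert (Hy2 : Cmod (y - x) < eps * (Cmod x * Cmod x) / 2) by (eapply Rlt_le_trans; [apply Hy| apply Rmin_r]).
  assert (Hyx : Cmod x / 2 <= Cmod y).
  { generalize (Cmod_triangle y (x - y)). replace (y + (x - y)) with x by ring.
    rewrite (Cmod_minus_sym x y). lra. }
  assert (Hy0 : y <> 0). { intro. subst. rewrite Cmod_0 in Hyx. lra. }
  replace (/ y - / x) with ((x - y) * (/ x * / y)) by (field; auto).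
  rewrite Cmod_mult, Cmod_mult, Cmod_inv, Cmod_inv by auto. rewrite Cmod_minus_sym.
  apply Cmod_gt_0 in Hy0.
  apply Rle_lt_trans with (Cmod (y - x) * (/ Cmod x * / (Cmod x / 2)))%R.
  { apply Rmult_le_compat_l. apply Cmod_ge_0. apply Rmult_le_compat_l.
    left; apply Rinv_0_lt_compat; lra. apply Rinv_le_contravar; lra. }
  replace (Cmod (y - x) * (/ Cmod x * / (Cmod x / 2)))%R with (Cmod (y - x) * 2 / (Cmod x * Cmod x))%R by (field; lra).
  apply Rlt_div_l. nra. lra.
Qed.

Lemma is_derive_Cinv_id (x : C) : x <> 0 -> is_derive Cinv x (- (/ x * / x)).
Proof.
  intros Hx. apply Cmod_gt_0 in Hx as Hm.
  change (- (/ x * / x)) with ((fun y => - (/ y * / x)) x).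
  apply (is_derive_Caratheodory Cinv _ x (Cmod x / 2)%R). lra.
  { intros y Hy. assert (y <> 0).
    { intro; subst. rewrite Cmod_minus_sym in Hy. unfold Cminus in Hy. rewrite Copp_0, Cplus_0_r in Hy. lra. }
    field; auto. }
  intros eps Heps. destruct (Ccontinuous_at_Cinv x Hx (eps * Cmod x)%R) as [d [Hd Hy]]. nra.
  exists d. split; auto. intros y Hy1. specialize (Hy y Hy1).
  replace (- (/ y * / x) - - (/ x * / x)) with ((/ y - / x) * - / x) by ring.
  rewrite Cmod_mult, Cmod_opp, Cmod_inv by auto.
  apply Rmult_lt_reg_r with (Cmod x). lra. rewrite Rmult_assoc, Rinv_l; lra.
Qed.

Lemma is_derive_Cinv (g : C -> C) x b : is_derive g x b -> g x <> 0 ->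
  is_derive (fun t => / g t) x (- b * (/ g x * / g x)).
Proof.
  intros Hg Hg0. replace (- b * (/ g x * / g x)) with (b * - (/ g x * / g x)) by ring.
  apply (is_derive_Ccomp Cinv g); [apply is_derive_Cinv_id |]; assumption.
Qed.

Lemma is_derive_Cdiv (f g : C -> C) x a b : is_derive f x a -> is_derive g x b -> g x <> 0 ->
  is_derive (fun t => f t / g t) x (a * / g x + f x * (- b * (/ g x * / g x))).
Proof. intros. apply (is_derive_Cmult f (fun t => / g t)); [| apply is_derive_Cinv]; assumption. Qed.

Lemma Cderiv_unique (f : C -> C) z l : is_derive f z l -> Cderiv f z = l.
Proof.
  intros H. unfold Cderiv.
  assert (H2 : is_derive f z (epsilon (inhabits (RtoC 0)) (fun l => @is_derive C_AbsRing C_NormedModule f z l))).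
  { apply epsilon_spec. exists l; auto. }
  apply is_C_derive_unique in H. apply is_C_derive_unique in H2. congruence.
Qed.

Local Close Scope C_scope.

(** * Polar form and the two arguments *)

Lemma C_ext (a b : C) : Re a = Re b -> Im a = Im b -> a = b.
Proof. destruct a, b; simpl; intros; subst; auto. Qed.

Lemma Rpower_gt_0 m n : 0 < Rpower m n.
Proof. apply exp_pos. Qed.

Definition polar (m a nu : R) : C :=
  (RtoC (Rpower m nu) * (RtoC (cos (nu * a)) + Ci * RtoC (sin (nu * a))))%C.

Lemma cpowD_polar U nu : cpowD U nu = polar (Cmod U) (argD U) nu.
Proof. reflexivity. Qed.

Lemma cpowP_polar w nu : cpowP w nu = polar (Cmod w) (argP w) nu.
Proof. reflexivity. Qed.

Lemma Re_polar m a nu : Re (polar m a nu) = Rpower m nu * cos (nu * a).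
Proof. unfold polar, Cmult, Cplus, RtoC, Ci; simpl. ring. Qed.

Lemma Im_polar m a nu : Im (polar m a nu) = Rpower m nu * sin (nu * a).
Proof. unfold polar, Cmult, Cplus, RtoC, Ci; simpl. ring. Qed.

Lemma polar_mult m a n1 n2 : (polar m a n1 * polar m a n2)%C = polar m a (n1 + n2).
Proof.
  unfold polar; apply C_ext; simpl; rewrite Rpower_plus;
    replace ((n1 + n2) * a) with (n1 * a + n2 * a) by ring;
    [rewrite cos_plus | rewrite sin_plus]; ring.
Qed.

Lemma polar_0 m a : polar m a 0 = RtoC 1.
Proof.
  apply C_ext; rewrite ?Re_polar, ?Im_polar; unfold Rpower;
    rewrite !Rmult_0_l, exp_0, ?cos_0, ?sin_0; simpl; ring.
Qed.

Lemma Cmod_polar m a n : Cmod (polar m a n) = Rpower m n.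
Proof.
  unfold Cmod. rewrite Re_polar, Im_polar.
  replace ((Rpower m n * cos (n * a)) ^ 2 + (Rpower m n * sin (n * a)) ^ 2)
    with (Rpower m n ^ 2 * (sin (n * a) ^ 2 + cos (n * a) ^ 2)) by ring.
  rewrite <- !Rsqr_pow2, sin2_cos2, Rmult_1_r. apply sqrt_Rsqr.
  left; apply Rpower_gt_0.
Qed.

Lemma polar_1 (w : C) a : w <> 0%C -> cos a = Re w / Cmod w -> sin a = Im w / Cmod w ->
  polar (Cmod w) a 1 = w.
Proof.
  intros Hw Hc Hs. apply Cmod_gt_0 in Hw. apply C_ext.
  - rewrite Re_polar, Rpower_1, Rmult_1_l, Hc by auto. field. lra.
  - rewrite Im_polar, Rpower_1, Rmult_1_l, Hs by auto. field. lra.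
Qed.

Lemma im_le_Cmod (z : C) : Rabs (Im z) <= Cmod z.
Proof.
  generalize (Cmod2_alt z) (Cmod_ge_0 z). intros H H0.
  rewrite <- (Rabs_right (Cmod z)) by lra. apply Rsqr_le_abs_0.
  rewrite !Rsqr_pow2. nra.
Qed.

Lemma Re_le_Cmod (z : C) : Re z <= Cmod z.
Proof. generalize (re_le_Cmod z). intros H. apply Rabs_le_between in H. lra. Qed.

Lemma Re_div_Cmod_bound (z : C) : z <> 0%C -> -1 <= Re z / Cmod z <= 1.
Proof.
  intros Hz. apply Cmod_gt_0 in Hz. generalize (re_le_Cmod z). intros H.
  apply Rabs_le_between in H.
  split; apply Rmult_le_reg_r with (Cmod z); auto; unfold Rdiv; rewrite Rmult_assoc, Rinv_l; lra.
Qed.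

Lemma sqrt_1_minus_Re_div_Cmod (z : C) : z <> 0%C -> sqrt (1 - (Re z / Cmod z)²) = Rabs (Im z) / Cmod z.
Proof.
  intros Hz. apply Cmod_gt_0 in Hz.
  assert (E : 1 - (Re z / Cmod z)² = (Im z / Cmod z)²).
  { generalize (Cmod2_alt z). intros H. unfold Rsqr. field_simplify; [ | lra | lra].
    f_equal. rewrite H. ring. }
  rewrite E, sqrt_Rsqr_abs. unfold Rdiv. rewrite Rabs_mult, Rabs_inv.
  rewrite (Rabs_right (Cmod z)); lra.
Qed.

Lemma cos_minus_2PI a : cos (a - 2 * PI) = cos a.
Proof. rewrite <- (cos_period (a - 2*PI) 1). f_equal. simpl. ring. Qed.

Lemma sin_minus_2PI a : sin (a - 2 * PI) = sin a.
Proof. rewrite <- (sin_period (a - 2*PI) 1). f_equal. simpl. ring. Qed.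

Lemma cos_sin_argD (z : C) : z <> 0%C ->
  cos (argD z) = Re z / Cmod z /\ sin (argD z) = Im z / Cmod z.
Proof.
  intros Hz. generalize (Re_div_Cmod_bound z Hz) (sqrt_1_minus_Re_div_Cmod z Hz). intros Hb Hs.
  apply Cmod_gt_0 in Hz.
  unfold argD. destruct (Rlt_dec (Im z) 0).
  - rewrite cos_neg, sin_neg, cos_acos, sin_acos, Hs by auto. split; auto.
    rewrite Rabs_left by auto. field. lra.
  - rewrite cos_minus_2PI, sin_minus_2PI, cos_acos, sin_acos, Hs by auto. split; auto.
    rewrite Rabs_right by lra. auto.
Qed.

Lemma cos_sin_argP (z : C) : z <> 0%C ->
  cos (argP z) = Re z / Cmod z /\ sin (argP z) = Im z / Cmod z.
Proof.
  intros Hz. generalize (Re_div_Cmod_bound z Hz) (sqrt_1_minus_Re_div_Cmod z Hz). intros Hb Hs.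
  apply Cmod_gt_0 in Hz.
  unfold argP. destruct (Rlt_dec (Im z) 0).
  - rewrite cos_neg, sin_neg, cos_acos, sin_acos, Hs by auto. split; auto.
    rewrite Rabs_left by auto. field. lra.
  - rewrite cos_acos, sin_acos, Hs by auto. split; auto.
    rewrite Rabs_right by lra. auto.
Qed.

Lemma atan_of_sin_cos t v : -(PI/2) < t < PI/2 -> sin t = v * cos t -> t = atan v.
Proof.
  intros Ht Hs. assert (Hc : 0 < cos t) by (apply cos_gt_0; lra).
  assert (E : tan t = v) by (unfold tan; rewrite Hs; field; lra).
  rewrite <- E. symmetry. apply atan_tan. lra.
Qed.

Lemma argD_range (z : C) :
  (Im z < 0 -> -PI <= argD z <= 0) /\ (0 <= Im z -> -2*PI <= argD z <= -PI).
Proof.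
  unfold argD. generalize (acos_bound (Re z / Cmod z)). intros Hb.
  split; intros H; destruct (Rlt_dec (Im z) 0); lra.
Qed.

Lemma argD_Im_neg (y : C) : Im y < 0 -> argD y = atan (- Re y / Im y) - PI/2.
Proof.
  intros H. assert (Hy : y <> 0%C). { intro; subst; simpl in H; lra. }
  destruct (cos_sin_argD y Hy) as [Hc Hs]. apply Cmod_gt_0 in Hy as Hm.
  destruct (argD_range y) as [R1 _]. specialize (R1 H).
  assert (Hsn : sin (argD y) < 0). { rewrite Hs. apply Rdiv_neg_pos; auto. }
  assert (N1 : argD y <> 0) by (intro E; rewrite E, sin_0 in Hsn; lra).
  assert (N2 : argD y <> -PI) by (intro E; rewrite E, sin_neg, sin_PI in Hsn; lra).
  enough (argD y + PI/2 = atan (- Re y / Im y)) by lra.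
  apply atan_of_sin_cos. lra.
  rewrite sin_plus, cos_plus, sin_PI2, cos_PI2, Hc, Hs. field. split; lra.
Qed.

Lemma argD_Im_pos (y : C) : 0 < Im y -> argD y = atan (- Re y / Im y) - 3 * (PI/2).
Proof.
  intros H. assert (Hy : y <> 0%C). { intro; subst; simpl in H; lra. }
  destruct (cos_sin_argD y Hy) as [Hc Hs]. apply Cmod_gt_0 in Hy as Hm.
  destruct (argD_range y) as [_ R1]. specialize (R1 (Rlt_le _ _ H)).
  assert (Hsn : 0 < sin (argD y)). { rewrite Hs. apply Rdiv_lt_0_compat; auto. }
  assert (N1 : argD y <> -PI) by (intro E; rewrite E, sin_neg, sin_PI in Hsn; lra).
  assert (N2 : argD y <> -2*PI).
  { intro E; rewrite E in Hsn. replace (-2*PI) with (-(2*PI)) in Hsn by ring.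
    rewrite sin_neg, sin_2PI in Hsn; lra. }
  enough (argD y + 3*(PI/2) = atan (- Re y / Im y)) by lra.
  apply atan_of_sin_cos. lra.
  rewrite sin_plus, cos_plus, sin_3PI2, cos_3PI2, Hc, Hs. field. split; lra.
Qed.

Lemma argD_Re_neg (y : C) : Re y < 0 -> argD y = atan (Im y / Re y) - PI.
Proof.
  intros H. assert (Hy : y <> 0%C). { intro; subst; simpl in H; lra. }
  destruct (cos_sin_argD y Hy) as [Hc Hs]. apply Cmod_gt_0 in Hy as Hm.
  destruct (argD_range y) as [R1 R2].
  assert (Hcn : cos (argD y) < 0). { rewrite Hc. apply Rdiv_neg_pos; auto. }
  assert (Rg : -2*PI <= argD y <= 0).
  { destruct (Rlt_dec (Im y) 0); [specialize (R1 r) | specialize (R2 (Rnot_lt_le _ _ n))]; lra. }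
  assert (N1 : -(3*(PI/2)) < argD y).
  { destruct (Rlt_dec (-(3*(PI/2))) (argD y)); auto. exfalso.
    assert (0 <= cos (argD y + 2 * PI)) by (apply cos_ge_0; lra).
    rewrite <- (cos_minus_2PI (argD y + 2*PI)) in H0.
    replace (argD y + 2 * PI - 2 * PI) with (argD y) in H0 by ring. lra. }
  assert (N2 : argD y < -(PI/2)).
  { destruct (Rlt_dec (argD y) (-(PI/2))); auto. exfalso.
    assert (0 <= cos (argD y)) by (apply cos_ge_0; lra). lra. }
  enough (argD y + PI = atan (Im y / Re y)) by lra.
  apply atan_of_sin_cos. lra.
  rewrite neg_sin, neg_cos, Hc, Hs. field. split; lra.
Qed.

Lemma argP_range (w : C) : 0 < Re w -> -(PI/2) < argP w < PI/2.
Proof.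
  intros H. assert (Hw : w <> 0%C) by (intro E; subst; simpl in H; lra).
  destruct (cos_sin_argP w Hw) as [Hc _]. apply Cmod_gt_0 in Hw as Hm.
  assert (Hcp : 0 < cos (argP w)) by (rewrite Hc; apply Rdiv_lt_0_compat; auto).
  generalize (acos_bound (Re w / Cmod w)) PI_RGT_0. intros Hb HPI.
  unfold argP in *. destruct (Rlt_dec (Im w) 0).
  - split; [|lra]. destruct (Rlt_dec (-(PI/2)) (- acos (Re w / Cmod w))); auto.
    exfalso. rewrite cos_neg in Hcp.
    assert (cos (acos (Re w / Cmod w)) <= 0) by (apply cos_le_0; lra). lra.
  - split; [lra|]. destruct (Rlt_dec (acos (Re w / Cmod w)) (PI/2)); auto.
    exfalso. assert (cos (acos (Re w / Cmod w)) <= 0) by (apply cos_le_0; lra). lra.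
Qed.

Lemma argP_Re_pos (w : C) : 0 < Re w -> argP w = atan (Im w / Re w).
Proof.
  intros H. assert (Hw : w <> 0%C) by (intro E; subst; simpl in H; lra).
  destruct (cos_sin_argP w Hw) as [Hc Hs]. apply Cmod_gt_0 in Hw as Hm.
  apply atan_of_sin_cos. apply argP_range; auto. rewrite Hc, Hs. field. split; lra.
Qed.

(** * Continuity of the fractional powers *)

Definition Rcontinuous_at (f : C -> R) (x : C) : Prop :=
  forall eps : R, 0 < eps -> exists del : R, 0 < del /\
    forall y, Cmod (y - x) < del -> Rabs (f y - f x) < eps.

Lemma Re_minus (y x : C) : Re (y - x)%C = Re y - Re x.
Proof. unfold Cminus, Cplus, Copp, Re, Im; simpl; ring. Qed.

Lemma Im_minus (y x : C) : Im (y - x)%C = Im y - Im x.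
Proof. unfold Cminus, Cplus, Copp, Re, Im; simpl; ring. Qed.

Lemma Re_near (x y : C) : Cmod (y - x) < Rabs (Re x) -> Rabs (Re y - Re x) < Rabs (Re x).
Proof. rewrite <- Re_minus. apply Rle_lt_trans, re_le_Cmod. Qed.

Lemma Im_near (x y : C) : Cmod (y - x) < Rabs (Im x) -> Rabs (Im y - Im x) < Rabs (Im x).
Proof. rewrite <- Im_minus. apply Rle_lt_trans, im_le_Cmod. Qed.

Lemma Rcontinuous_at_Re x : Rcontinuous_at Re x.
Proof.
  intros eps He. exists eps. split; auto. intros y Hy. rewrite <- Re_minus.
  eapply Rle_lt_trans; [apply re_le_Cmod | exact Hy].
Qed.

Lemma Rcontinuous_at_Im x : Rcontinuous_at Im x.
Proof.
  intros eps He. exists eps. split; auto. intros y Hy. rewrite <- Im_minus.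
  eapply Rle_lt_trans; [apply im_le_Cmod | exact Hy].
Qed.

Lemma Rcontinuous_at_Cmod x : Rcontinuous_at Cmod x.
Proof.
  intros eps He. exists eps. split; auto. intros y Hy.
  eapply Rle_lt_trans; [|apply Hy].
  generalize (Cmod_triangle (y - x) x) (Cmod_triangle (x - y) y).
  replace (y - x + x)%C with y by ring. replace (x - y + y)%C with x by ring.
  rewrite (Cmod_minus_sym x y). intros. apply Rabs_le; lra.
Qed.

Lemma Rcontinuous_at_const c x : Rcontinuous_at (fun _ => c) x.
Proof.
  intros eps He. exists 1. split; [lra|]. intros.
  unfold Rminus; rewrite Rplus_opp_r, Rabs_R0; auto.
Qed.

Lemma Rcontinuous_at_plus f g x : Rcontinuous_at f x -> Rcontinuous_at g x ->
  Rcontinuous_at (fun y => f y + g y) x.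
Proof.
  intros Hf Hg eps He. destruct (Hf (eps/2)) as [d1 [Hd1 H1]]. lra.
  destruct (Hg (eps/2)) as [d2 [Hd2 H2]]. lra.
  exists (Rmin d1 d2). split. apply Rmin_case; lra.
  intros y Hy. specialize (H1 y (Rlt_le_trans _ _ _ Hy (Rmin_l _ _))).
  specialize (H2 y (Rlt_le_trans _ _ _ Hy (Rmin_r _ _))).
  replace (f y + g y - (f x + g x)) with ((f y - f x) + (g y - g x)) by ring.
  eapply Rle_lt_trans. apply Rabs_triang. lra.
Qed.

Lemma Rcontinuous_at_opp f x : Rcontinuous_at f x -> Rcontinuous_at (fun y => - f y) x.
Proof.
  intros Hf eps He. destruct (Hf eps He) as [d [Hd H]]. exists d. split; auto.
  intros y Hy. rewrite <- Rabs_Ropp. replace (- (- f y - - f x)) with (f y - f x) by ring. auto.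
Qed.

Lemma Rcontinuous_at_mult f g x : Rcontinuous_at f x -> Rcontinuous_at g x ->
  Rcontinuous_at (fun y => f y * g y) x.
Proof.
  intros Hf Hg eps He.
  set (A := Rabs (f x) + 1). set (B := Rabs (g x) + 1).
  assert (HA : 0 < A) by (unfold A; generalize (Rabs_pos (f x)); lra).
  assert (HB : 0 < B) by (unfold B; generalize (Rabs_pos (g x)); lra).
  destruct (Hf (eps / (2 * B))) as [d1 [Hd1 H1]]. apply Rdiv_lt_0_compat; lra.
  destruct (Hg (Rmin 1 (eps / (2 * A)))) as [d2 [Hd2 H2]].
  { apply Rmin_case. lra. apply Rdiv_lt_0_compat; lra. }
  exists (Rmin d1 d2). split. apply Rmin_case; lra.
  intros y Hy. specialize (H1 y (Rlt_le_trans _ _ _ Hy (Rmin_l _ _))).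
  specialize (H2 y (Rlt_le_trans _ _ _ Hy (Rmin_r _ _))).
  assert (H2a : Rabs (g y - g x) < 1) by (eapply Rlt_le_trans; [apply H2|apply Rmin_l]).
  assert (H2b : Rabs (g y - g x) < eps / (2 * A)) by (eapply Rlt_le_trans; [apply H2|apply Rmin_r]).
  replace (f y * g y - f x * g x) with ((f y - f x) * g y + f x * (g y - g x)) by ring.
  eapply Rle_lt_trans. apply Rabs_triang. rewrite !Rabs_mult.
  assert (Hgy : Rabs (g y) <= B).
  { unfold B. replace (g y) with (g x + (g y - g x)) by ring.
    eapply Rle_trans. apply Rabs_triang. lra. }
  assert (E1 : Rabs (f y - f x) * Rabs (g y) <= eps / (2 * B) * B).
  { apply Rmult_le_compat; try apply Rabs_pos; lra. }
  replace (eps / (2 * B) * B) with (eps / 2) in E1 by (field; lra).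
  assert (Rabs (f x) * Rabs (g y - g x) < eps / 2).
  { apply Rle_lt_trans with (A * Rabs (g y - g x)).
    apply Rmult_le_compat_r. apply Rabs_pos. unfold A; lra.
    apply Rmult_lt_reg_l with (/ A). apply Rinv_0_lt_compat; lra.
    rewrite <- Rmult_assoc, Rinv_l, Rmult_1_l by lra.
    replace (/ A * (eps / 2)) with (eps / (2 * A)) by (field; lra). auto. }
  lra.
Qed.

Lemma Rcontinuous_at_comp (g : R -> R) f x : continuity_pt g (f x) -> Rcontinuous_at f x ->
  Rcontinuous_at (fun y => g (f y)) x.
Proof.
  intros Hg Hf eps He. destruct (Hg eps He) as [alp [Ha Hg2]].
  destruct (Hf alp Ha) as [d [Hd Hf2]]. exists d. split; auto.
  intros y Hy. destruct (Req_dec (f x) (f y)) as [E|E].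
  - rewrite E. unfold Rminus; rewrite Rplus_opp_r, Rabs_R0; auto.
  - apply (Hg2 (f y)). split. split. constructor. auto. apply Hf2; auto.
Qed.

Lemma Rcontinuous_at_div f g x : Rcontinuous_at f x -> Rcontinuous_at g x -> g x <> 0 ->
  Rcontinuous_at (fun y => f y / g y) x.
Proof.
  intros Hf Hg Hg0. apply Rcontinuous_at_mult; [exact Hf |].
  apply (Rcontinuous_at_comp Rinv); [| exact Hg].
  exact (continuity_pt_inv (fun t => t) (g x) (continuity_pt_id (g x)) Hg0).
Qed.

Lemma Rcontinuous_at_ext f g x (d : R) : 0 < d -> (forall y, Cmod (y - x) < d -> f y = g y) ->
  Rcontinuous_at g x -> Rcontinuous_at f x.
Proof.
  intros Hd Hfg Hg eps He. destruct (Hg eps He) as [d1 [Hd1 H1]].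
  exists (Rmin d d1). split. apply Rmin_case; lra. intros y Hy.
  rewrite !Hfg. apply H1. eapply Rlt_le_trans; [apply Hy|apply Rmin_r].
  unfold Cminus; rewrite Cplus_opp_r, Cmod_0; auto.
  eapply Rlt_le_trans; [apply Hy|apply Rmin_l].
Qed.

Lemma Cmod_le_Re_Im (z : C) : Cmod z <= Rabs (Re z) + Rabs (Im z).
Proof.
  change (Cmod z) with (sqrt (Re z ^ 2 + Im z ^ 2)).
  rewrite <- (sqrt_Rsqr (Rabs (Re z) + Rabs (Im z))).
  2:{ generalize (Rabs_pos (Re z)) (Rabs_pos (Im z)); lra. }
  apply sqrt_le_1_alt. rewrite <- !Rsqr_pow2, (Rsqr_abs (Re z)), (Rsqr_abs (Im z)).
  unfold Rsqr. generalize (Rabs_pos (Re z)) (Rabs_pos (Im z)); nra.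
Qed.

Lemma Ccontinuous_at_Re_Im (f : C -> C) x :
  Rcontinuous_at (fun y => Re (f y)) x -> Rcontinuous_at (fun y => Im (f y)) x ->
  Ccontinuous_at f x.
Proof.
  intros H1 H2 eps He. destruct (H1 (eps/2)) as [d1 [Hd1 G1]]. lra.
  destruct (H2 (eps/2)) as [d2 [Hd2 G2]]. lra.
  exists (Rmin d1 d2). split. apply Rmin_case; lra. intros y Hy.
  specialize (G1 y (Rlt_le_trans _ _ _ Hy (Rmin_l _ _))).
  specialize (G2 y (Rlt_le_trans _ _ _ Hy (Rmin_r _ _))).
  eapply Rle_lt_trans. apply Cmod_le_Re_Im. rewrite Re_minus, Im_minus. lra.
Qed.

Lemma Ccontinuous_at_comp (g f : C -> C) x : Ccontinuous_at g (f x) -> Ccontinuous_at f x ->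
  Ccontinuous_at (fun y => g (f y)) x.
Proof.
  intros Hg Hf eps He. destruct (Hg eps He) as [a [Ha G]].
  destruct (Hf a Ha) as [d [Hd F]]. exists d. split; auto.
Qed.

Lemma Ccontinuous_at_polar (m a : C -> R) nu x : 0 < m x ->
  Rcontinuous_at m x -> Rcontinuous_at a x -> Ccontinuous_at (fun y => polar (m y) (a y) nu) x.
Proof.
  intros Hm0 Hm Ha.
  assert (Hpow : Rcontinuous_at (fun y => Rpower (m y) nu) x).
  { apply (Rcontinuous_at_comp (fun t => Rpower t nu)); [| exact Hm].
    apply derivable_continuous_pt. eexists. apply derivable_pt_lim_power; exact Hm0. }
  assert (Hang : Rcontinuous_at (fun y => nu * a y) x)
    by (apply Rcontinuous_at_mult; [apply Rcontinuous_at_const | exact Ha]).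
  apply Ccontinuous_at_Re_Im.
  - apply (Rcontinuous_at_ext _ (fun y => Rpower (m y) nu * cos (nu * a y)) x 1); [lra | intros; apply Re_polar |].
    apply Rcontinuous_at_mult; [exact Hpow | apply (Rcontinuous_at_comp cos); [apply continuity_cos | exact Hang]].
  - apply (Rcontinuous_at_ext _ (fun y => Rpower (m y) nu * sin (nu * a y)) x 1); [lra | intros; apply Im_polar |].
    apply Rcontinuous_at_mult; [exact Hpow | apply (Rcontinuous_at_comp sin); [apply continuity_sin | exact Hang]].
Qed.

(* The slit of [argD] is the ray [0, +oo), which [D^u_kappa] avoids. *)
Definition off_slit (z : C) : Prop := Im z <> 0 \/ Re z < 0.

Lemma off_slit_neq_0 z : off_slit z -> z <> 0%C.
Proof. intros [H|H] E; subst; simpl in H; lra. Qed.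

Lemma Rcontinuous_at_atan_quot f g x : Rcontinuous_at f x -> Rcontinuous_at g x -> g x <> 0 ->
  Rcontinuous_at (fun y => atan (f y / g y)) x.
Proof.
  intros Hf Hg Hg0. apply (Rcontinuous_at_comp atan (fun y => f y / g y)).
  - apply derivable_continuous_pt, derivable_pt_atan.
  - apply Rcontinuous_at_div; assumption.
Qed.

Lemma Rcontinuous_at_argD x : off_slit x -> Rcontinuous_at argD x.
Proof.
  intros Hx.
  assert (HmRe : Rcontinuous_at (fun y => - Re y) x) by apply Rcontinuous_at_opp, Rcontinuous_at_Re.
  destruct (Rlt_dec (Im x) 0) as [H|H]; [|destruct (Rlt_dec 0 (Im x)) as [H'|H']].
  - apply (Rcontinuous_at_ext argD (fun y => atan (- Re y / Im y) + - (PI/2)) x (Rabs (Im x))).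
    { apply Rabs_pos_lt; lra. }
    { intros y Hy. apply Im_near in Hy. rewrite (Rabs_left (Im x)) in Hy by lra. apply Rabs_def2 in Hy.
      rewrite argD_Im_neg by lra. ring. }
    apply Rcontinuous_at_plus; [| apply Rcontinuous_at_const].
    apply Rcontinuous_at_atan_quot; [exact HmRe | apply Rcontinuous_at_Im | lra].
  - apply (Rcontinuous_at_ext argD (fun y => atan (- Re y / Im y) + - (3*(PI/2))) x (Rabs (Im x))).
    { apply Rabs_pos_lt; lra. }
    { intros y Hy. apply Im_near in Hy. rewrite (Rabs_right (Im x)) in Hy by lra. apply Rabs_def2 in Hy.
      rewrite argD_Im_pos by lra. ring. }
    apply Rcontinuous_at_plus; [| apply Rcontinuous_at_const].
    apply Rcontinuous_at_atan_quot; [exact HmRe | apply Rcontinuous_at_Im | lra].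
  - assert (HRe : Re x < 0) by (destruct Hx; [lra | auto]).
    apply (Rcontinuous_at_ext argD (fun y => atan (Im y / Re y) + - PI) x (Rabs (Re x))).
    { apply Rabs_pos_lt; lra. }
    { intros y Hy. apply Re_near in Hy. rewrite (Rabs_left (Re x)) in Hy by lra. apply Rabs_def2 in Hy.
      rewrite argD_Re_neg by lra. ring. }
    apply Rcontinuous_at_plus; [| apply Rcontinuous_at_const].
    apply Rcontinuous_at_atan_quot; [apply Rcontinuous_at_Im | apply Rcontinuous_at_Re | lra].
Qed.

Lemma Rcontinuous_at_argP x : 0 < Re x -> Rcontinuous_at argP x.
Proof.
  intros H. apply (Rcontinuous_at_ext argP (fun y => atan (Im y / Re y)) x (Rabs (Re x))).
  { apply Rabs_pos_lt; lra. }
  { intros y Hy. apply Re_near in Hy. rewrite (Rabs_right (Re x)) in Hy by lra. apply Rabs_def2 in Hy.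
    apply argP_Re_pos. lra. }
  apply Rcontinuous_at_atan_quot; [apply Rcontinuous_at_Im | apply Rcontinuous_at_Re | lra].
Qed.

Lemma Ccontinuous_at_cpowD x nu : off_slit x -> Ccontinuous_at (fun y => cpowD y nu) x.
Proof.
  intros Hx. apply (Ccontinuous_at_polar Cmod argD).
  - apply Cmod_gt_0, off_slit_neq_0, Hx.
  - apply Rcontinuous_at_Cmod.
  - apply Rcontinuous_at_argD, Hx.
Qed.

Lemma Ccontinuous_at_cpowP x nu : 0 < Re x -> Ccontinuous_at (fun y => cpowP y nu) x.
Proof.
  intros Hx. apply (Ccontinuous_at_polar Cmod argP).
  - apply Cmod_gt_0. intro E; subst; simpl in Hx; lra.
  - apply Rcontinuous_at_Cmod.
  - apply Rcontinuous_at_argP, Hx.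
Qed.

(** * The powers [U^(1/3)], [U^(2/3)], [U^(4/3)] and [w^(-1/2)] *)

Local Open Scope C_scope.

Lemma RtoC_div (a b : R) : b <> 0%R -> RtoC (a / b) = RtoC a / RtoC b.
Proof. intros. apply C_ext; simpl; field; auto. Qed.

Lemma RtoC_neq_0 (r : R) : r <> 0%R -> RtoC r <> 0.
Proof. intros H E. apply RtoC_inj in E. auto. Qed.

Lemma Cmult_neq_0 (a b : C) : a <> 0 -> b <> 0 -> a * b <> 0.
Proof.
  intros Ha Hb E. apply Cmod_gt_0 in Ha. apply Cmod_gt_0 in Hb.
  generalize (Cmod_mult a b). rewrite E, Cmod_0. intros. nra.
Qed.

Lemma Cplus_Re_pos_neq_0 (a b : C) : (0 < Re a + Re b)%R -> a + b <> 0.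
Proof. intros H E. rewrite <- re_plus, E in H. simpl in H. lra. Qed.

Lemma Re_1_plus_pos (J : C) : (Cmod J <= 1/2)%R -> (0 < Re (1 + J))%R.
Proof. intros. rewrite re_plus. simpl. generalize (re_le_Cmod J). intros H0. apply Rabs_le_between in H0. lra. Qed.

Lemma Cmod_1_plus_ge (J : C) : (Cmod J <= 1/2)%R -> (1/2 <= Cmod (1 + J))%R.
Proof.
  intros HJ. generalize (Cmod_triangle (1 + J) (- J)). rewrite Cmod_opp.
  replace (1 + J + - J) with (RtoC 1) by ring. rewrite Cmod_R, Rabs_R1. lra.
Qed.

Lemma cpowD_mult (U : C) a b : cpowD U a * cpowD U b = cpowD U (a + b).
Proof. rewrite !cpowD_polar. apply polar_mult. Qed.

Lemma cpowD_1 (U : C) : U <> 0 -> cpowD U 1 = U.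
Proof. intros H. destruct (cos_sin_argD U H). apply polar_1; auto. Qed.

Lemma Cmod_cpowD (U : C) a : Cmod (cpowD U a) = Rpower (Cmod U) a.
Proof. rewrite cpowD_polar. apply Cmod_polar. Qed.

Lemma cpowD_neq_0 (U : C) a : cpowD U a <> 0.
Proof.
  intro E. generalize (Cmod_cpowD U a). rewrite E, Cmod_0. intro H.
  generalize (Rpower_gt_0 (Cmod U) a). lra.
Qed.

Notation cbrt U := (cpowD U (1/3)).

Lemma cbrt_cube (U : C) : U <> 0 -> cbrt U * cbrt U * cbrt U = U.
Proof. intros H. rewrite !cpowD_mult. replace (1/3 + 1/3 + 1/3)%R with 1%R by field. apply cpowD_1; auto. Qed.

Lemma cpowD_2_3 (U : C) : cpowD U (2/3) = cbrt U * cbrt U.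
Proof. rewrite cpowD_mult. f_equal. field. Qed.

Lemma cpowD_4_3 (U : C) : cpowD U (4/3) = cbrt U * cbrt U * cbrt U * cbrt U.
Proof. rewrite !cpowD_mult. f_equal. field. Qed.

Lemma sum_of_squares3_neq_0 (a : C) : a <> 0 -> a * a + a * a + a * a <> 0.
Proof.
  intros Ha. replace (a * a + a * a + a * a) with (RtoC 3 * (a * a)) by ring.
  apply Cmult_neq_0; [apply RtoC_neq_0; lra | apply Cmult_neq_0; auto].
Qed.

(* Caratheodory's quotient for the cube root: [y - x = (b - a) (b^2 + b a + a^2)] with [a^3 = x], [b^3 = y]. *)
Lemma is_derive_cbrt (x : C) : off_slit x -> is_derive (fun u => cbrt u) x (/ (RtoC 3 * (cbrt x * cbrt x))).
Proof.
  intros Hx. apply off_slit_neq_0 in Hx as H0. apply Cmod_gt_0 in H0 as Hm.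
  set (a := cbrt x). assert (Ha : a <> 0) by apply cpowD_neq_0.
  apply is_derive_eq_val with ((fun y => / (cbrt y * cbrt y + cbrt y * a + a * a)) x).
  2:{ cbv beta. fold a. clearbody a. field. split; auto. apply sum_of_squares3_neq_0; auto. }
  apply (is_derive_Caratheodory _ (fun y => / (cbrt y * cbrt y + cbrt y * a + a * a)) x (Cmod x));
    [exact Hm | |].
  - intros y Hy. assert (Hy0 : y <> 0).
    { intro E; subst. rewrite Cmod_minus_sym in Hy. unfold Cminus in Hy. rewrite Copp_0, Cplus_0_r in Hy. lra. }
    set (b := cbrt y). assert (Hb : b <> 0) by apply cpowD_neq_0.
    assert (Ey : b * b * b = y) by (apply cbrt_cube; auto).
    assert (Ex : a * a * a = x) by (apply cbrt_cube; auto).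
    assert (HD : b * b + b * a + a * a <> 0).
    { intro E. assert (Eyx : y - x = (b - a) * (b * b + b * a + a * a)) by (rewrite <- Ey, <- Ex; ring).
      rewrite E, Cmult_0_r in Eyx. assert (Hyx : y = x).
      { replace y with ((y - x) + x) by ring. rewrite Eyx. ring. }
      assert (Hba : b = a) by (unfold b, a; rewrite Hyx; reflexivity).
      rewrite Hba in E. revert E. apply sum_of_squares3_neq_0; auto. }
    cbv beta. fold b. fold a. clearbody a b. rewrite <- Ey, <- Ex. field. auto.
  - apply (Ccontinuous_at_comp (fun z => / (z * z + z * a + a * a)) (fun y => cbrt y)).
    + eapply Ccontinuous_at_is_derive. apply is_derive_Cinv; [| apply sum_of_squares3_neq_0; auto].
      apply is_derive_Cplus; [apply is_derive_Cplus |]; [apply is_derive_Cmult ..| apply is_derive_Cconst];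
        first [apply is_derive_Cid | apply is_derive_Cconst].
    + apply Ccontinuous_at_cpowD; auto.
Qed.

Lemma is_derive_cpowD_2_3 (x : C) : off_slit x ->
  is_derive (fun u => cpowD u (2/3)) x (RtoC (2/3) * cpowD x (2/3) / x).
Proof.
  intros Hx. assert (H0 : x <> 0) by (apply off_slit_neq_0; auto).
  apply (is_derive_ext (fun u => cbrt u * cbrt u)). { intros; symmetry; apply cpowD_2_3. }
  eapply is_derive_eq_val. apply is_derive_Cmult; apply is_derive_cbrt; auto.
  rewrite cpowD_2_3. assert (Ex := cbrt_cube x H0).
  assert (Hs : cbrt x <> 0) by apply cpowD_neq_0.
  set (s := cbrt x) in *. clearbody s. rewrite <- Ex, RtoC_div by lra. field. auto.
Qed.

Lemma is_derive_cpowD_4_3 (x : C) : off_slit x ->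
  is_derive (fun u => cpowD u (4/3)) x (RtoC (4/3) * cpowD x (4/3) / x).
Proof.
  intros Hx. assert (H0 : x <> 0) by (apply off_slit_neq_0; auto).
  apply (is_derive_ext (fun u => cbrt u * cbrt u * cbrt u * cbrt u)). { intros; symmetry; apply cpowD_4_3. }
  eapply is_derive_eq_val.
  { apply is_derive_Cmult; [apply is_derive_Cmult; [apply is_derive_Cmult |] |];
      apply is_derive_cbrt; auto. }
  rewrite cpowD_4_3. assert (Ex := cbrt_cube x H0).
  assert (Hs : cbrt x <> 0) by apply cpowD_neq_0.
  set (s := cbrt x) in *. clearbody s. rewrite <- Ex, RtoC_div by lra. field. auto.
Qed.

Notation isqrt w := (cpowP w (-1/2)).

Lemma isqrt_sq_mult (w : C) : w <> 0 -> isqrt w * isqrt w * w = 1.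
Proof.
  intros Hw. destruct (cos_sin_argP w Hw) as [Hc Hs].
  rewrite <- (polar_1 w (argP w)) at 3 by auto. rewrite !cpowP_polar, !polar_mult.
  replace (-1/2 + -1/2 + 1)%R with 0%R by field. apply polar_0.
Qed.

Lemma Cmod_isqrt (w : C) : Cmod (isqrt w) = Rpower (Cmod w) (-1/2).
Proof. rewrite cpowP_polar. apply Cmod_polar. Qed.

Lemma isqrt_neq_0 (w : C) : isqrt w <> 0.
Proof.
  intro E. generalize (Cmod_isqrt w). rewrite E, Cmod_0.
  generalize (Rpower_gt_0 (Cmod w) (-1/2)). lra.
Qed.

Lemma Re_isqrt_pos (w : C) : (0 < Re w)%R -> (0 < Re (isqrt w))%R.
Proof.
  intros H. rewrite cpowP_polar, Re_polar. apply Rmult_lt_0_compat. apply Rpower_gt_0.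
  apply cos_gt_0; generalize (argP_range w H); lra.
Qed.

(* Caratheodory's quotient: with [a^2 w = 1] and [b^2 v = 1],
   [b - a = - (v - w) b^2 a^2 / (b + a)], and [Re (b + a) > 0]. *)
Lemma is_derive_isqrt (w : C) : (0 < Re w)%R ->
  is_derive (fun v => isqrt v) w (RtoC (-1/2) * (isqrt w * isqrt w * isqrt w)).
Proof.
  intros Hw. assert (Hw0 : w <> 0) by (intro E; subst; simpl in Hw; lra).
  set (a := isqrt w). assert (Ha : a <> 0) by apply isqrt_neq_0.
  assert (Hra : (0 < Re a)%R) by (apply Re_isqrt_pos; auto).
  assert (Haa : a + a <> 0) by (apply Cplus_Re_pos_neq_0; lra).
  apply is_derive_eq_val with ((fun v => - (isqrt v * isqrt v * (a * a)) * / (isqrt v + a)) w).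
  2:{ cbv beta. fold a. clearbody a. rewrite RtoC_div by lra. field. auto. }
  apply (is_derive_Caratheodory _ (fun v => - (isqrt v * isqrt v * (a * a)) * / (isqrt v + a)) w (Re w));
    [exact Hw | |].
  - intros v Hv. assert (Hrv : (0 < Re v)%R).
    { assert (Hn := Re_near w v). rewrite (Rabs_right (Re w)) in Hn by lra.
      apply Hn, Rabs_def2 in Hv. lra. }
    assert (Hv0 : v <> 0) by (intro E; subst; simpl in Hrv; lra).
    set (b := isqrt v). assert (Hb : b <> 0) by apply isqrt_neq_0.
    assert (Hrb : (0 < Re b)%R) by (apply Re_isqrt_pos; auto).
    assert (Hba : b + a <> 0) by (apply Cplus_Re_pos_neq_0; lra).
    assert (Ev : b * b * v = 1) by (apply isqrt_sq_mult; auto).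
    assert (Ew : a * a * w = 1) by (apply isqrt_sq_mult; auto).
    cbv beta. fold b. fold a. clearbody a b.
    assert (Ev' : v = / (b * b)).
    { replace v with ((b * b * v) * / (b * b)) by (field; auto). rewrite Ev. ring. }
    assert (Ew' : w = / (a * a)).
    { replace w with ((a * a * w) * / (a * a)) by (field; auto). rewrite Ew. ring. }
    rewrite Ev', Ew'. field. auto.
  - apply (Ccontinuous_at_comp (fun z => - (z * z * (a * a)) * / (z + a)) (fun v => isqrt v)).
    + eapply Ccontinuous_at_is_derive. apply is_derive_Cmult.
      * apply is_derive_Copp, is_derive_Cmult; [apply is_derive_Cmult; apply is_derive_Cid | apply is_derive_Cconst].
      * apply is_derive_Cinv; [apply is_derive_Cplus; [apply is_derive_Cid | apply is_derive_Cconst] | exact Haa].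
    + apply Ccontinuous_at_cpowP; auto.
Qed.

Lemma Cmod_isqrt_1_plus_le (J : C) : (Cmod J <= 1/2)%R -> (Cmod (isqrt (1 + J)) <= 2)%R.
Proof.
  intros HJ. rewrite Cmod_isqrt. apply Cmod_1_plus_ge in HJ.
  replace (-1/2)%R with (- / 2)%R by field. rewrite Rpower_Ropp, Rpower_sqrt by lra.
  assert (1/2 < sqrt (Cmod (1 + J)))%R.
  { apply Rlt_le_trans with (sqrt (1/2)). apply sqrt_more; lra. apply sqrt_le_1_alt. lra. }
  apply Rle_trans with (/ (1/2))%R. apply Rinv_le_contravar; lra. lra.
Qed.

(* [p - 1 = - p^2 J / (p + 1)] for [p = (1 + J)^(-1/2)], and [Re p > 0]. *)
Lemma Cmod_isqrt_1_plus_minus_1_le (J : C) : (Cmod J <= 1/2)%R ->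
  (Cmod (isqrt (1 + J) - 1) <= 4 * Cmod J)%R.
Proof.
  intros HJ. assert (Hw := Re_1_plus_pos J HJ).
  assert (Hw0 : 1 + J <> 0) by (intro E; rewrite E in Hw; simpl in Hw; lra).
  assert (Hb : (Cmod (isqrt (1 + J)) <= 2)%R) by (apply Cmod_isqrt_1_plus_le; auto).
  assert (Hrp := Re_isqrt_pos (1 + J) Hw).
  assert (E := isqrt_sq_mult (1 + J) Hw0).
  set (p := isqrt (1 + J)) in *. clearbody p.
  assert (Hp1 : p + 1 <> 0) by (apply Cplus_Re_pos_neq_0; simpl; lra).
  assert (Ep1 : p - 1 = - (p * p * J) * / (p + 1)).
  { assert (E2 : (p - 1) * (p + 1) = - (p * p * J)).
    { replace ((p - 1) * (p + 1)) with (p * p - 1) by ring. rewrite <- E. ring. }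
    replace (p - 1) with (((p - 1) * (p + 1)) * / (p + 1)) by (field; auto).
    rewrite E2. reflexivity. }
  rewrite Ep1, Cmod_mult, Cmod_opp, !Cmod_mult, Cmod_inv by auto.
  assert (1 < Cmod (p + 1))%R.
  { eapply Rlt_le_trans; [|apply Re_le_Cmod]. rewrite re_plus. simpl. lra. }
  assert (0 < / Cmod (p + 1) < 1)%R.
  { split. apply Rinv_0_lt_compat; lra. apply Rmult_lt_reg_l with (Cmod (p + 1)); [lra|]. rewrite Rinv_r by lra. lra. }
  generalize (Cmod_ge_0 p) (Cmod_ge_0 J). intros.
  assert (Cmod p * Cmod p <= 4)%R by nra.
  assert (Cmod p * Cmod p * Cmod J <= 4 * Cmod J)%R by nra.
  nra.
Qed.

(** * Partial derivatives of [K] *)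

Definition dJdW (U W X Y : C) : C :=
  RtoC (8/9) * W / cpowD U (2/3) - RtoC (16/27) / cpowD U (4/3) + RtoC (4/9) * (X + Y) / U.

Definition dJdX (U W X Y : C) : C :=
  RtoC (4/9) / U * (W - RtoC (2/3) / cpowD U (2/3)) - RtoC 4 * Ci / (RtoC 3 * cpowD U (2/3))
  - RtoC 2 * X / (RtoC 3 * cpowD U (4/3)) + RtoC (10/9) * Y / cpowD U (4/3).

Definition dJdY (U W X Y : C) : C :=
  RtoC (4/9) / U * (W - RtoC (2/3) / cpowD U (2/3)) + RtoC 4 * Ci / (RtoC 3 * cpowD U (2/3))
  - RtoC 2 * Y / (RtoC 3 * cpowD U (4/3)) + RtoC (10/9) * X / cpowD U (4/3).

Definition dJdU (U W X Y : C) : C :=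
  - RtoC (8/27) * W * W / (cpowD U (2/3) * U) + RtoC (64/81) * W / (cpowD U (4/3) * U)
  - RtoC (32/81) / (U * U * U)
  - RtoC (4/9) * (X + Y) / (U * U) * (W - RtoC (2/3) / cpowD U (2/3))
  + RtoC (16/81) * (X + Y) / (cpowD U (2/3) * U * U)
  + RtoC 8 * Ci * (X - Y) / (RtoC 9 * cpowD U (2/3) * U)
  + RtoC 4 * (X * X + Y * Y) / (RtoC 9 * cpowD U (4/3) * U)
  - RtoC (40/27) * X * Y / (cpowD U (4/3) * U).

(* [d (1 + J)^(-1/2) = - (1/2) (1 + J)^(-3/2) dJ], and [(1 + J)^(-3/2)] is written as a cube. *)
Definition dKdW (U W X Y : C) : C :=
  - RtoC (3/2) * cpowD U (2/3) * W
  + dJdW U W X Y * (isqrt (1 + Jfun U W X Y) * isqrt (1 + Jfun U W X Y) * isqrt (1 + Jfun U W X Y))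
    / (RtoC 6 * cpowD U (2/3)).

Definition dKdX (U W X Y : C) : C :=
  dJdX U W X Y * (isqrt (1 + Jfun U W X Y) * isqrt (1 + Jfun U W X Y) * isqrt (1 + Jfun U W X Y))
  / (RtoC 6 * cpowD U (2/3)).

Definition dKdY (U W X Y : C) : C :=
  dJdY U W X Y * (isqrt (1 + Jfun U W X Y) * isqrt (1 + Jfun U W X Y) * isqrt (1 + Jfun U W X Y))
  / (RtoC 6 * cpowD U (2/3)).

Definition dKdU (U W X Y : C) : C :=
  - RtoC (1/2) * cpowD U (2/3) / U * W * W
  + RtoC 2 * (isqrt (1 + Jfun U W X Y) - 1) / (RtoC 9 * cpowD U (2/3) * U)
  + dJdU U W X Y * (isqrt (1 + Jfun U W X Y) * isqrt (1 + Jfun U W X Y) * isqrt (1 + Jfun U W X Y))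
    / (RtoC 6 * cpowD U (2/3)).

Definition R1_formula (U W X Y : C) : C :=
  - dKdU U W X Y / (1 + dKdW U W X Y).
Definition R2_formula (U W X Y : C) : C :=
  (Ci * dKdY U W X Y - dKdW U W X Y * (Ci * X)) / (1 + dKdW U W X Y).
Definition R3_formula (U W X Y : C) : C :=
  (- Ci * dKdX U W X Y - dKdW U W X Y * (- Ci * Y)) / (1 + dKdW U W X Y).

Lemma is_derive_isqrt_comp (g : C -> C) (x b : C) : is_derive g x b -> (0 < Re (g x))%R ->
  is_derive (fun t => isqrt (g t)) x (b * (RtoC (-1/2) * (isqrt (g x) * isqrt (g x) * isqrt (g x)))).
Proof. intros. apply (is_derive_Ccomp (fun v => isqrt v) g); [apply is_derive_isqrt |]; auto. Qed.

Ltac unfold_formula h :=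
  first [ constr_eq h Kfun; unfold Kfun | constr_eq h Jfun; unfold Jfun
        | constr_eq h dJdW; unfold dJdW | constr_eq h dJdX; unfold dJdX
        | constr_eq h dJdY; unfold dJdY | constr_eq h dJdU; unfold dJdU
        | constr_eq h dKdW; unfold dKdW | constr_eq h dKdX; unfold dKdX
        | constr_eq h dKdY; unfold dKdY | constr_eq h dKdU; unfold dKdU
        | constr_eq h R1_formula; unfold R1_formula | constr_eq h R2_formula; unfold R2_formula
        | constr_eq h R3_formula; unfold R3_formula ].

Ltac derive_step :=
  match goal with
  | |- is_derive (fun _ => ?h _ _ _ _) _ _ => unfold_formula h; cbv beta
  | |- is_derive (?h _ _ _) _ _ => unfold_formula h; cbv beta
  | |- is_derive (fun t => t) _ _ => apply is_derive_Cid
  | |- is_derive (fun t => cpowP (@?g t) (-1/2)) _ _ => apply is_derive_isqrt_comp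
  | |- is_derive (fun t => cpowD t (2/3)) _ _ => apply is_derive_cpowD_2_3
  | |- is_derive (fun t => cpowD t (4/3)) _ _ => apply is_derive_cpowD_4_3
  | |- is_derive (fun t => Cplus (@?a t) (@?b t)) _ _ => apply is_derive_Cplus
  | |- is_derive (fun t => Cminus (@?a t) (@?b t)) _ _ => apply is_derive_Cminus
  | |- is_derive (fun t => Copp (@?a t)) _ _ => apply is_derive_Copp
  | |- is_derive (fun t => Cdiv (@?a t) (@?b t)) _ _ => apply is_derive_Cdiv
  | |- is_derive (fun t => Cinv (@?a t)) _ _ => apply is_derive_Cinv
  | |- is_derive (fun t => Cmult (@?a t) (@?b t)) _ _ => apply is_derive_Cmult
  | |- is_derive (fun t => ?c) _ _ => apply is_derive_Cconst
  | |- is_derive (Cmult ?c) _ _ => apply (is_derive_Cmult (fun _ => c) (fun t => t))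
  | |- is_derive (Cplus ?c) _ _ => apply (is_derive_Cplus (fun _ => c) (fun t => t))
  | |- is_derive (Cminus ?c) _ _ => apply (is_derive_Cminus (fun _ => c) (fun t => t))
  | |- is_derive (Cdiv ?c) _ _ => apply (is_derive_Cdiv (fun _ => c) (fun t => t))
  | |- is_derive Copp _ _ => apply (is_derive_Copp (fun t => t))
  | |- is_derive Cinv _ _ => apply (is_derive_Cinv (fun t => t))
  end.

Ltac neq_0 := repeat first [ split | assumption | apply cpowD_neq_0 | apply isqrt_neq_0
                           | apply Cmult_neq_0 | apply RtoC_neq_0; lra ].

Ltac derive := repeat (match goal with |- is_derive _ _ _ => derive_step end); cbv beta; neq_0.

Section PartialsOfK.
Variables (U W X Y : C).
Hypothesis HU : off_slit U.
Hypothesis HJ : (0 < Re (1 + Jfun U W X Y))%R.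

Let HU0 : U <> 0 := off_slit_neq_0 U HU.

Lemma is_derive_Kfun_W : is_derive (fun w => Kfun U w X Y) W (dKdW U W X Y).
Proof. eapply is_derive_eq_val; [derive | unfold dKdW, dJdW; rewrite !RtoC_div by lra; field; neq_0]. Qed.

Lemma is_derive_Kfun_X : is_derive (fun x => Kfun U W x Y) X (dKdX U W X Y).
Proof. eapply is_derive_eq_val; [derive | unfold dKdX, dJdX; rewrite !RtoC_div by lra; field; neq_0]. Qed.

Lemma is_derive_Kfun_Y : is_derive (fun y => Kfun U W X y) Y (dKdY U W X Y).
Proof. eapply is_derive_eq_val; [derive | unfold dKdY, dJdY; rewrite !RtoC_div by lra; field; neq_0]. Qed.

Lemma is_derive_Kfun_U : is_derive (fun u => Kfun u W X Y) U (dKdU U W X Y).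
Proof. eapply is_derive_eq_val; [derive | unfold dKdU, dJdU; rewrite !RtoC_div by lra; field; neq_0]. Qed.

End PartialsOfK.

Lemma Rc1_eq_formula U W X Y : off_slit U -> (0 < Re (1 + Jfun U W X Y))%R ->
  Rc1 U W X Y = R1_formula U W X Y.
Proof.
  intros HU HJ. unfold Rc1, R1_formula, gfun, dU, dW.
  rewrite (Cderiv_unique (fun u => Kfun u W X Y) _ _ (is_derive_Kfun_U U W X Y HU HJ)),
          (Cderiv_unique (fun w => Kfun U w X Y) _ _ (is_derive_Kfun_W U W X Y HU HJ)).
  f_equal. ring.
Qed.

Lemma Rc2_eq_formula U W X Y : off_slit U -> (0 < Re (1 + Jfun U W X Y))%R ->
  Rc2 U W X Y = R2_formula U W X Y.
Proof.
  intros HU HJ. unfold Rc2, R2_formula, gfun, dY, dW.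
  rewrite (Cderiv_unique (fun y => Kfun U W X y) _ _ (is_derive_Kfun_Y U W X Y HU HJ)),
          (Cderiv_unique (fun w => Kfun U w X Y) _ _ (is_derive_Kfun_W U W X Y HU HJ)).
  reflexivity.
Qed.

Lemma Rc3_eq_formula U W X Y : off_slit U -> (0 < Re (1 + Jfun U W X Y))%R ->
  Rc3 U W X Y = R3_formula U W X Y.
Proof.
  intros HU HJ. unfold Rc3, R3_formula, gfun, dX, dW.
  rewrite (Cderiv_unique (fun x => Kfun U W x Y) _ _ (is_derive_Kfun_X U W X Y HU HJ)),
          (Cderiv_unique (fun w => Kfun U w X Y) _ _ (is_derive_Kfun_W U W X Y HU HJ)).
  reflexivity.
Qed.

(* By continuity of [j], [Re (1 + j) > 0] and hence [F = G] hold on a neighbourhood of [x]. *)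
Lemma Cderiv_eq_of_local_formula (F G j : C -> C) (x l : C) :
  (forall y, (0 < Re (1 + j y))%R -> F y = G y) ->
  Ccontinuous_at j x -> (0 < Re (1 + j x))%R -> is_derive G x l -> Cderiv F x = l.
Proof.
  intros HFG Hc Hp HG. apply Cderiv_unique, (is_derive_ext_loc G F x l); auto.
  destruct (Hc _ Hp) as [d [Hd H]]. exists (mkposreal d Hd). intros y Hy.
  symmetry. apply HFG. specialize (H y Hy). rewrite re_plus in *.
  generalize (re_le_Cmod (j y - j x)). rewrite Re_minus. intros.
  apply Rabs_le_between in H0. lra.
Qed.

Local Close Scope C_scope.

(** * Orders of growth in [T = |U|^(1/3)] *)

Definition bounded (T : R) (e : C) (k : Z) (c : R) : Prop := Cmod e <= c * powerRZ T k.

Definition bounded_below (T : R) (e : C) (k : Z) (c : R) : Prop := 0 < c /\ c * powerRZ T k <= Cmod e.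

Lemma powerRZ_gt_0 T k : 1 <= T -> 0 < powerRZ T k.
Proof. intros; apply powerRZ_lt; lra. Qed.

Lemma powerRZ_le_exp T k1 k2 : 1 <= T -> (k1 <= k2)%Z -> powerRZ T k1 <= powerRZ T k2.
Proof. intros. rewrite !powerRZ_Rpower by lra. apply Rle_Rpower; auto. apply IZR_le; auto. Qed.

Section Bounded.
Variable T : R.
Hypothesis HT : 1 <= T.

Lemma bounded_const_nonneg e k c : bounded T e k c -> 0 <= c.
Proof.
  unfold bounded. intros H. generalize (Cmod_ge_0 e) (powerRZ_gt_0 T k HT). intros.
  destruct (Rle_dec 0 c); auto. exfalso. nra.
Qed.

Lemma bounded_weaken e k k' c : bounded T e k c -> (k <= k')%Z -> bounded T e k' c.
Proof.
  intros H Hk. generalize (bounded_const_nonneg _ _ _ H). intros. unfold bounded in *.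
  eapply Rle_trans. apply H. apply Rmult_le_compat_l; auto. apply powerRZ_le_exp; auto.
Qed.

Lemma bounded_le_const e k c c' : bounded T e k c -> c <= c' -> bounded T e k c'.
Proof.
  unfold bounded. intros H Hc. eapply Rle_trans; [exact H |].
  apply Rmult_le_compat_r; [left; apply powerRZ_gt_0 |]; auto.
Qed.

Lemma bounded_plus a b k1 k2 c1 c2 : bounded T a k1 c1 -> bounded T b k2 c2 ->
  bounded T (a + b)%C (Z.max k1 k2) (c1 + c2).
Proof.
  intros H1 H2.
  apply (bounded_weaken _ _ (Z.max k1 k2)) in H1; [| apply Z.le_max_l].
  apply (bounded_weaken _ _ (Z.max k1 k2)) in H2; [| apply Z.le_max_r].
  unfold bounded in *. eapply Rle_trans. apply Cmod_triangle. lra.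
Qed.

Lemma bounded_opp a k c : bounded T a k c -> bounded T (- a)%C k c.
Proof. unfold bounded. rewrite Cmod_opp. auto. Qed.

Lemma bounded_minus a b k1 k2 c1 c2 : bounded T a k1 c1 -> bounded T b k2 c2 ->
  bounded T (a - b)%C (Z.max k1 k2) (c1 + c2).
Proof. intros. apply bounded_plus, bounded_opp; auto. Qed.

Lemma bounded_mult a b k1 k2 c1 c2 : bounded T a k1 c1 -> bounded T b k2 c2 ->
  bounded T (a * b)%C (k1 + k2) (c1 * c2).
Proof.
  intros H1 H2. generalize (bounded_const_nonneg _ _ _ H1) (bounded_const_nonneg _ _ _ H2). intros.
  unfold bounded in *. rewrite Cmod_mult, powerRZ_add by lra.
  replace (c1 * c2 * (powerRZ T k1 * powerRZ T k2)) with ((c1 * powerRZ T k1) * (c2 * powerRZ T k2)) by ring.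
  apply Rmult_le_compat; auto; apply Cmod_ge_0.
Qed.

Lemma bounded_inv a k c : bounded_below T a k c -> bounded T (/ a)%C (- k) (/ c).
Proof.
  intros [Hc H]. generalize (powerRZ_gt_0 T k HT). intros.
  assert (Ha : a <> 0%C). { intro E. rewrite E, Cmod_0 in H. nra. }
  unfold bounded. rewrite Cmod_inv, powerRZ_neg', <- Rinv_mult by auto.
  apply Rinv_le_contravar; auto. nra.
Qed.

Lemma bounded_div a b k1 k2 c1 c2 : bounded T a k1 c1 -> bounded_below T b k2 c2 ->
  bounded T (a / b)%C (k1 + - k2) (c1 * / c2).
Proof. intros. apply bounded_mult, bounded_inv; auto. Qed.

Lemma bounded_RtoC r : bounded T (RtoC r) 0 (Rabs r).
Proof. unfold bounded. rewrite Cmod_R. simpl. lra. Qed.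

Lemma bounded_0 k : bounded T (RtoC 0) k 0.
Proof. unfold bounded. rewrite Cmod_0. lra. Qed.

Lemma bounded_Ci : bounded T Ci 0 1.
Proof. unfold bounded. rewrite Cmod_Ci. simpl. lra. Qed.

Lemma bounded_isqrt (J : C) : Cmod J <= 1/2 -> bounded T (isqrt (1 + J)%C) 0 2.
Proof. intros. unfold bounded. simpl. rewrite Rmult_1_r. apply Cmod_isqrt_1_plus_le; auto. Qed.

Lemma bounded_isqrt_minus_1 (J : C) k c : bounded T J k c -> Cmod J <= 1/2 ->
  bounded T (isqrt (1 + J) - 1)%C k (4 * c).
Proof. unfold bounded. intros. eapply Rle_trans. apply Cmod_isqrt_1_plus_minus_1_le; auto. lra. Qed.

Lemma bounded_below_mult a b k1 k2 c1 c2 : bounded_below T a k1 c1 -> bounded_below T b k2 c2 ->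
  bounded_below T (a * b)%C (k1 + k2) (c1 * c2).
Proof.
  intros [H1 G1] [H2 G2]. generalize (powerRZ_gt_0 T k1 HT) (powerRZ_gt_0 T k2 HT). intros.
  split. nra. rewrite Cmod_mult, powerRZ_add by lra.
  replace (c1 * c2 * (powerRZ T k1 * powerRZ T k2)) with ((c1 * powerRZ T k1) * (c2 * powerRZ T k2)) by ring.
  apply Rmult_le_compat; nra.
Qed.

Lemma bounded_below_RtoC r : r <> 0 -> bounded_below T (RtoC r) 0 (Rabs r).
Proof. intros. split. apply Rabs_pos_lt; auto. rewrite Cmod_R. simpl. lra. Qed.

Lemma bounded_below_1_plus (K : C) : Cmod K <= 1/2 -> bounded_below T (1 + K)%C 0 (1/2).
Proof. intros. split. lra. simpl. rewrite Rmult_1_r. apply Cmod_1_plus_ge; auto. Qed.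

End Bounded.

(* Zero has every order; [-1000] is below every order that occurs. *)
Ltac solve_bounded :=
  match goal with
  | |- bounded _ (Cminus (cpowP (Cplus (RtoC 1) _) _) (RtoC 1)) _ _ =>
      eapply bounded_isqrt_minus_1; eassumption
  | |- bounded _ (cpowP (Cplus (RtoC 1) _) _) _ _ => eapply bounded_isqrt; eassumption
  | |- bounded _ (Cplus _ _) _ _ => eapply bounded_plus; [assumption | solve_bounded | solve_bounded]
  | |- bounded _ (Cminus _ _) _ _ => eapply bounded_minus; [assumption | solve_bounded | solve_bounded]
  | |- bounded _ (Copp _) _ _ => eapply bounded_opp; solve_bounded
  | |- bounded _ (Cmult _ _) _ _ => eapply bounded_mult; [assumption | solve_bounded | solve_bounded]
  | |- bounded _ (Cdiv _ _) _ _ => eapply bounded_div; [assumption | solve_bounded | solve_bounded_below]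
  | |- bounded _ (Cinv _) _ _ => eapply bounded_inv; [assumption | solve_bounded_below]
  | |- bounded _ (RtoC 0) _ _ => apply (bounded_0 _ (-1000))
  | |- bounded _ (RtoC _) _ _ => apply bounded_RtoC
  | |- bounded _ Ci _ _ => apply bounded_Ci
  | |- bounded _ (?h _ _ _ _) _ _ => unfold_formula h; solve_bounded
  | |- bounded _ _ _ _ => eassumption
  end
with solve_bounded_below :=
  match goal with
  | |- bounded_below _ (Cmult _ _) _ _ => eapply bounded_below_mult; [assumption | solve_bounded_below | solve_bounded_below]
  | |- bounded_below _ (Cplus (RtoC 1) _) _ _ => eapply bounded_below_1_plus; eassumption
  | |- bounded_below _ (RtoC _) _ _ => apply bounded_below_RtoC; lra
  | |- bounded_below _ _ _ _ => eassumption
  end.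

Ltac bounded_order := eapply bounded_weaken; [assumption | solve_bounded | apply Z.leb_le; reflexivity].

Record graded (rho T : R) (U W X Y : C) : Prop := {
  graded_T : 1 <= T;
  graded_off_slit : off_slit U;
  graded_U : bounded T U 3 1;
  graded_U_below : bounded_below T U 3 1;
  graded_U23 : bounded T (cpowD U (2/3)) 2 1;
  graded_U23_below : bounded_below T (cpowD U (2/3)) 2 1;
  graded_U43 : bounded T (cpowD U (4/3)) 4 1;
  graded_U43_below : bounded_below T (cpowD U (4/3)) 4 1;
  graded_W : bounded T W (-8) rho;
  graded_X : bounded T X (-4) rho;
  graded_Y : bounded T Y (-4) rho }.

Record admissible (rho CJ T : R) (U W X Y : C) : Prop := {
  admissible_graded : graded rho T U W X Y;
  admissible_J_small : Cmod (Jfun U W X Y) <= 1/2;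
  admissible_J : bounded T (Jfun U W X Y) (-6) CJ;
  admissible_dKdW_small : Cmod (dKdW U W X Y) <= 1/2 }.

Lemma J_order rho : exists CJ, forall T U W X Y, graded rho T U W X Y ->
  bounded T (Jfun U W X Y) (-6) CJ.
Proof. eexists. intros T U W X Y []. unfold Jfun. bounded_order. Qed.

Lemma dKdW_order rho : exists CK, forall T U W X Y, graded rho T U W X Y ->
  Cmod (Jfun U W X Y) <= 1/2 -> bounded T (dKdW U W X Y) (-6) CK.
Proof. eexists. intros T U W X Y [] HJ. unfold dKdW. bounded_order. Qed.

Definition order_bound (rho CJ : R) (F : C -> C -> C -> C -> C) (k : Z) (c : R) : Prop :=
  forall T U W X Y, admissible rho CJ T U W X Y -> bounded T (F U W X Y) k c.

Lemma order_bound_le_const rho CJ F k c c' : order_bound rho CJ F k c -> c <= c' ->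
  order_bound rho CJ F k c'.
Proof.
  intros H Hc T U W X Y HA. destruct (HA) as [[HT] _ _ _].
  apply (bounded_le_const T HT _ _ c); auto.
Qed.

Lemma one_plus_neq_0 (K : C) : Cmod K <= 1/2 -> (1 + K)%C <> 0%C.
Proof. intros H E. generalize (Re_1_plus_pos K H). rewrite E. simpl. lra. Qed.

Ltac admissible_facts HA :=
  let HJ := fresh "HJ" in let HK := fresh "HK" in let HS := fresh "HS" in
  destruct HA as [[? HS] HJ ? HK];
  pose proof (Re_1_plus_pos _ HJ); pose proof (one_plus_neq_0 _ HK); pose proof (off_slit_neq_0 _ HS).

Ltac component_order formula_eq :=
  eexists; intros T U W X Y HA; admissible_facts HA;
  rewrite formula_eq by assumption; bounded_order.

Ltac partial_order formula_eq :=
  eexists; intros T U W X Y HA; admissible_facts HA; unfold dW, dX, dY;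
  match goal with |- bounded _ (Cderiv ?F ?x) _ _ =>
    let E := fresh "E" in
    eassert (E : Cderiv F x = _);
    [ eapply Cderiv_eq_of_local_formula;
      [ intros ? Hy; apply formula_eq; [assumption | exact Hy]
      | eapply Ccontinuous_at_is_derive; derive
      | assumption
      | derive ]
    | rewrite E; bounded_order ]
  end.

Section Orders.
Variables rho CJ : R.

Lemma Rc1_order : exists c, order_bound rho CJ Rc1 (-11) c.
Proof. component_order Rc1_eq_formula. Qed.
Lemma Rc2_order : exists c, order_bound rho CJ Rc2 (-4) c.
Proof. component_order Rc2_eq_formula. Qed.
Lemma Rc3_order : exists c, order_bound rho CJ Rc3 (-4) c.
Proof. component_order Rc3_eq_formula. Qed.

Lemma dW_Rc1_order : exists c, order_bound rho CJ (dW Rc1) (-9) c.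
Proof. partial_order Rc1_eq_formula. Qed.
Lemma dX_Rc1_order : exists c, order_bound rho CJ (dX Rc1) (-7) c.
Proof. partial_order Rc1_eq_formula. Qed.
Lemma dY_Rc1_order : exists c, order_bound rho CJ (dY Rc1) (-7) c.
Proof. partial_order Rc1_eq_formula. Qed.
Lemma dW_Rc2_order : exists c, order_bound rho CJ (dW Rc2) (-2) c.
Proof. partial_order Rc2_eq_formula. Qed.
Lemma dX_Rc2_order : exists c, order_bound rho CJ (dX Rc2) (-6) c.
Proof. partial_order Rc2_eq_formula. Qed.
Lemma dY_Rc2_order : exists c, order_bound rho CJ (dY Rc2) (-6) c.
Proof. partial_order Rc2_eq_formula. Qed.
Lemma dW_Rc3_order : exists c, order_bound rho CJ (dW Rc3) (-2) c.
Proof. partial_order Rc3_eq_formula. Qed.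
Lemma dX_Rc3_order : exists c, order_bound rho CJ (dX Rc3) (-6) c.
Proof. partial_order Rc3_eq_formula. Qed.
Lemma dY_Rc3_order : exists c, order_bound rho CJ (dY Rc3) (-6) c.
Proof. partial_order Rc3_eq_formula. Qed.

End Orders.

Lemma R_orders rho CJ : exists Cst, 0 < Cst /\
  order_bound rho CJ Rc1 (-11) Cst /\ order_bound rho CJ Rc2 (-4) Cst /\
  order_bound rho CJ Rc3 (-4) Cst /\
  order_bound rho CJ (dW Rc1) (-9) Cst /\ order_bound rho CJ (dX Rc1) (-7) Cst /\
  order_bound rho CJ (dY Rc1) (-7) Cst /\
  order_bound rho CJ (dW Rc2) (-2) Cst /\ order_bound rho CJ (dX Rc2) (-6) Cst /\
  order_bound rho CJ (dY Rc2) (-6) Cst /\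
  order_bound rho CJ (dW Rc3) (-2) Cst /\ order_bound rho CJ (dX Rc3) (-6) Cst /\
  order_bound rho CJ (dY Rc3) (-6) Cst.
Proof.
  destruct (Rc1_order rho CJ) as [c1 H1], (Rc2_order rho CJ) as [c2 H2],
    (Rc3_order rho CJ) as [c3 H3], (dW_Rc1_order rho CJ) as [c4 H4],
    (dX_Rc1_order rho CJ) as [c5 H5], (dY_Rc1_order rho CJ) as [c6 H6],
    (dW_Rc2_order rho CJ) as [c7 H7], (dX_Rc2_order rho CJ) as [c8 H8],
    (dY_Rc2_order rho CJ) as [c9 H9], (dW_Rc3_order rho CJ) as [c10 H10],
    (dX_Rc3_order rho CJ) as [c11 H11], (dY_Rc3_order rho CJ) as [c12 H12].
  exists (1 + (Rabs c1 + Rabs c2 + Rabs c3 + Rabs c4 + Rabs c5 + Rabs c6 + Rabs c7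
               + Rabs c8 + Rabs c9 + Rabs c10 + Rabs c11 + Rabs c12)).
  generalize (Rle_abs c1) (Rle_abs c2) (Rle_abs c3) (Rle_abs c4) (Rle_abs c5) (Rle_abs c6)
    (Rle_abs c7) (Rle_abs c8) (Rle_abs c9) (Rle_abs c10) (Rle_abs c11) (Rle_abs c12)
    (Rabs_pos c1) (Rabs_pos c2) (Rabs_pos c3) (Rabs_pos c4) (Rabs_pos c5) (Rabs_pos c6)
    (Rabs_pos c7) (Rabs_pos c8) (Rabs_pos c9) (Rabs_pos c10) (Rabs_pos c11) (Rabs_pos c12).
  intros.
  repeat split; [lra | ..]; (eapply order_bound_le_const; [eassumption | lra]).
Qed.

(** * From orders in [T] to the weighted norms on [D^u_kappa] *)

Lemma wnorm_le beta0 kappa nu phi (c : R) :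
  (forall U, inD beta0 kappa U -> Cmod (cpowD U nu * phi U)%C <= c) ->
  Rbar_le (wnorm beta0 kappa nu phi) c.
Proof.
  intros H. unfold wnorm.
  destruct (Lub_Rbar_correct (fun r => exists U, inD beta0 kappa U /\ r = Cmod (cpowD U nu * phi U)%C))
    as [_ Hlub].
  apply Hlub. intros x [U [HU ->]]. apply H; auto.
Qed.

Lemma weighted_le_wnorm beta0 kappa nu phi U : is_finite (wnorm beta0 kappa nu phi) ->
  inD beta0 kappa U -> Cmod (cpowD U nu * phi U)%C <= real (wnorm beta0 kappa nu phi).
Proof.
  intros Hf HU. unfold wnorm in *.
  destruct (Lub_Rbar_correct (fun r => exists U, inD beta0 kappa U /\ r = Cmod (cpowD U nu * phi U)%C))
    as [Hub _].
  specialize (Hub (Cmod (cpowD U nu * phi U)%C)). rewrite <- Hf in Hub. apply Hub. exists U; auto.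
Qed.

Lemma ball_weighted_le beta0 kappa rho (Z1 Z2 Z3 : C -> C) U :
  in_ball beta0 kappa rho Z1 Z2 Z3 -> inD beta0 kappa U ->
  Cmod (cpowD U (8/3) * Z1 U)%C <= rho /\ Cmod (cpowD U (4/3) * Z2 U)%C <= rho /\
  Cmod (cpowD U (4/3) * Z3 U)%C <= rho.
Proof.
  intros [[_ F1] [[_ F2] [[_ F3] Hs]]] HU.
  generalize (weighted_le_wnorm _ _ _ _ U F1 HU) (weighted_le_wnorm _ _ _ _ U F2 HU)
    (weighted_le_wnorm _ _ _ _ U F3 HU).
  generalize (Cmod_ge_0 (cpowD U (8/3) * Z1 U)%C) (Cmod_ge_0 (cpowD U (4/3) * Z2 U)%C)
    (Cmod_ge_0 (cpowD U (4/3) * Z3 U)%C).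
  intros. lra.
Qed.

(* [|Im U| >= tan beta0 Re U + kappa] forces [|Im U| >= m] or [- Re U >= m], with [m = kappa / (2 (1 + tan beta0))]. *)
Lemma inD_off_slit_large beta0 kappa (U : C) : 0 < beta0 -> beta0 < PI/2 -> 0 < kappa ->
  inD beta0 kappa U -> off_slit U /\ kappa / (2 * (1 + tan beta0)) <= Cmod U.
Proof.
  intros Hb0 Hb1 Hk H. unfold inD in H. assert (Ha := tan_gt_0 beta0 Hb0 Hb1).
  set (a := tan beta0) in *. clearbody a. split.
  - destruct (Req_dec (Im U) 0) as [E|E]; [right|left; auto].
    rewrite E, Rabs_R0 in H. nra.
  - set (m := kappa / (2 * (1 + a))).
    assert (Hm : 0 < m) by (unfold m; apply Rdiv_lt_0_compat; lra).
    assert (Hm2 : m * (2 * (1 + a)) = kappa) by (unfold m; field; lra).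
    destruct (Rle_dec m (Rabs (Im U))).
    + eapply Rle_trans; [exact r | apply im_le_Cmod].
    + assert (HR : m <= - Re U) by (apply Rmult_le_reg_l with a; nra).
      eapply Rle_trans; [|apply re_le_Cmod]. rewrite Rabs_left; lra.
Qed.

Lemma Rpower_thirds (x : R) (m : Z) nu : 0 < x -> nu = IZR m / 3 ->
  Rpower x nu = powerRZ (Rpower x (1/3)) m.
Proof.
  intros Hx ->. rewrite powerRZ_Rpower by apply Rpower_gt_0. rewrite Rpower_mult. f_equal. field.
Qed.

Lemma bounded_of_weighted T (U v : C) rho (m : Z) nu : 1 <= T -> Rpower (Cmod U) nu = powerRZ T m ->
  Cmod (cpowD U nu * v)%C <= rho -> bounded T v (- m) rho.
Proof.
  intros HT E H. unfold bounded. rewrite Cmod_mult, Cmod_cpowD, E in H.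
  generalize (powerRZ_gt_0 T m HT). intros. rewrite powerRZ_neg'.
  apply Rmult_le_reg_l with (powerRZ T m); auto.
  replace (powerRZ T m * (rho * / powerRZ T m)) with rho by (field; lra). auto.
Qed.

Lemma weighted_le_of_bounded T (U e : C) k c nu : 1 <= T -> bounded T e k c ->
  Rpower (Cmod U) nu = powerRZ T (- k) -> Cmod (cpowD U nu * e)%C <= c.
Proof.
  intros HT H E. unfold bounded in H. rewrite Cmod_mult, Cmod_cpowD, E.
  generalize (powerRZ_gt_0 T (-k) HT). intros.
  apply Rle_trans with (powerRZ T (- k) * (c * powerRZ T k)). apply Rmult_le_compat_l; lra.
  replace (powerRZ T (- k) * (c * powerRZ T k)) with (c * (powerRZ T (-k) * powerRZ T k)) by ring.
  rewrite <- powerRZ_add by lra. replace (- k + k)%Z with 0%Z by lia. simpl. lra.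
Qed.

Lemma Cmod_le_half_of_bounded T J k c : 1 <= T -> (k <= -1)%Z -> 2 * Rabs c <= T ->
  bounded T J k c -> Cmod J <= 1/2.
Proof.
  intros HT Hk Hc H. generalize (bounded_const_nonneg T HT _ _ _ H). intros. unfold bounded in H.
  assert (powerRZ T k <= / T).
  { replace (/ T) with (powerRZ T (-1)) by (simpl; field; lra). apply powerRZ_le_exp; auto. }
  generalize (powerRZ_gt_0 T k HT). intros. rewrite Rabs_right in Hc by lra.
  assert (c * powerRZ T k <= c * / T) by (apply Rmult_le_compat_l; auto).
  assert (c * / T <= 1/2).
  { apply Rmult_le_reg_r with T. lra. rewrite Rmult_assoc, Rinv_l by lra. lra. }
  lra.
Qed.

Lemma graded_on_domain beta0 kappa rho Z1 Z2 Z3 U :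
  in_ball beta0 kappa rho Z1 Z2 Z3 -> inD beta0 kappa U -> off_slit U -> 1 <= Cmod U ->
  graded rho (Rpower (Cmod U) (1/3)) U (Z1 U) (Z2 U) (Z3 U).
Proof.
  intros HZ HU HS HU1. set (T := Rpower (Cmod U) (1/3)).
  assert (Hm : 0 < Cmod U) by lra.
  assert (HT : 1 <= T).
  { unfold T. rewrite <- (Rpower_O (Cmod U)) at 1 by lra. apply Rle_Rpower; lra. }
  assert (EU : Cmod U = powerRZ T 3).
  { rewrite <- (Rpower_1 (Cmod U)) at 1 by auto. apply Rpower_thirds; auto. field. }
  assert (E2 : Cmod (cpowD U (2/3)) = powerRZ T 2) by (rewrite Cmod_cpowD; apply Rpower_thirds; auto).
  assert (E4 : Cmod (cpowD U (4/3)) = powerRZ T 4) by (rewrite Cmod_cpowD; apply Rpower_thirds; auto).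
  destruct (ball_weighted_le _ _ _ _ _ _ U HZ HU) as [B1 [B2 B3]].
  split; auto;
    try (unfold bounded; rewrite ?EU, ?E2, ?E4; lra);
    try (unfold bounded_below; rewrite ?EU, ?E2, ?E4; split; lra).
  - apply (bounded_of_weighted T U (Z1 U) rho 8 (8/3)); auto. apply Rpower_thirds; auto.
  - apply (bounded_of_weighted T U (Z2 U) rho 4 (4/3)); auto. apply Rpower_thirds; auto.
  - apply (bounded_of_weighted T U (Z3 U) rho 4 (4/3)); auto. apply Rpower_thirds; auto.
Qed.

Lemma Rpower_cube_root R0 : 0 < R0 -> Rpower (R0 ^ 3) (1/3) = R0.
Proof.
  intros. rewrite <- (Rpower_pow 3 R0), Rpower_mult by auto.
  replace (INR 3 * (1/3)) with 1 by (simpl; field). apply Rpower_1; auto.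
Qed.

(* The choice of [kappa0]: it makes [T = |U|^(1/3)] exceed [2 |CJ|] and [2 |CK|], so that
   the order [-6] of [J] and of [dKdW] forces both to have modulus at most [1/2]. *)
Lemma admissible_on_domain beta0 kappa rho CJ CK Z1 Z2 Z3 U :
  0 < beta0 -> beta0 < PI/2 ->
  (forall T U W X Y, graded rho T U W X Y -> bounded T (Jfun U W X Y) (-6) CJ) ->
  (forall T U W X Y, graded rho T U W X Y -> Cmod (Jfun U W X Y) <= 1/2 ->
     bounded T (dKdW U W X Y) (-6) CK) ->
  2 * (1 + tan beta0) * (1 + 2 * Rabs CJ + 2 * Rabs CK) ^ 3 <= kappa ->
  in_ball beta0 kappa rho Z1 Z2 Z3 -> inD beta0 kappa U ->
  admissible rho CJ (Rpower (Cmod U) (1/3)) U (Z1 U) (Z2 U) (Z3 U).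
Proof.
  intros Hb0 Hb1 HJ HK Hk HZ HU.
  assert (Ha := tan_gt_0 beta0 Hb0 Hb1).
  set (R0 := 1 + 2 * Rabs CJ + 2 * Rabs CK) in *.
  assert (HR0 : 1 <= R0) by (unfold R0; generalize (Rabs_pos CJ) (Rabs_pos CK); lra).
  assert (HR03 : 1 <= R0 ^ 3) by (rewrite <- (pow1 3); apply pow_incr; lra).
  assert (Hkappa : R0 ^ 3 <= kappa / (2 * (1 + tan beta0))).
  { apply Rmult_le_reg_r with (2 * (1 + tan beta0)); [lra |].
    unfold Rdiv. rewrite Rmult_assoc, Rinv_l by lra. lra. }
  destruct (inD_off_slit_large beta0 kappa U) as [HS HmU]; auto; [nra |].
  assert (HT : R0 <= Rpower (Cmod U) (1/3)).
  { rewrite <- (Rpower_cube_root R0) by lra. apply Rle_Rpower_l; lra. }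
  assert (HG := graded_on_domain _ _ _ _ _ _ U HZ HU HS ltac:(lra)).
  set (T := Rpower (Cmod U) (1/3)) in *.
  assert (HT1 : 1 <= T) by lra.
  unfold R0 in HT. generalize (Rabs_pos CJ) (Rabs_pos CK). intros.
  assert (HJs : Cmod (Jfun U (Z1 U) (Z2 U) (Z3 U)) <= 1/2).
  { apply (Cmod_le_half_of_bounded T _ (-6) CJ); auto; [lia | lra]. }
  split; auto.
  apply (Cmod_le_half_of_bounded T _ (-6) CK); auto; [lia | lra].
Qed.

Lemma wnorm_le_of_order beta0 kappa rho CJ Z1 Z2 Z3 F k c nu :
  (forall U, inD beta0 kappa U -> admissible rho CJ (Rpower (Cmod U) (1/3)) U (Z1 U) (Z2 U) (Z3 U)) ->
  order_bound rho CJ F k c -> nu = IZR (- k) / 3 ->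
  Rbar_le (wnorm beta0 kappa nu (eval_on F Z1 Z2 Z3)) c.
Proof.
  intros HA HF Hnu. apply wnorm_le. intros U HU.
  destruct (HA U HU) as [HG _ _ _]. destruct (HG) as [HT _ _ [_ HUb]].
  apply (weighted_le_of_bounded (Rpower (Cmod U) (1/3)) _ _ k); [exact HT | apply HF, HA, HU |].
  apply Rpower_thirds; [| exact Hnu].
  eapply Rlt_le_trans; [| exact HUb]. apply Rmult_lt_0_compat; [lra | apply powerRZ_gt_0, HT].
Qed.

Theorem lemma5p5 (beta0 rho : R) (Hb0 : 0 < beta0) (Hb1 : beta0 < PI / 2) (Hrho : 0 < rho) :
  exists kappa0 : R, 0 < kappa0 /\
  exists Cst : R, 0 < Cst /\
  forall kappa : R, kappa0 <= kappa ->
  forall Z1 Z2 Z3 : C -> C, in_ball beta0 kappa rho Z1 Z2 Z3 ->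
    let nrm nu F := wnorm beta0 kappa nu (eval_on F Z1 Z2 Z3) in
    Rbar_le (nrm (11/3) Rc1) Cst /\
    Rbar_le (nrm (4/3) Rc2) Cst /\
    Rbar_le (nrm (4/3) Rc3) Cst /\
    Rbar_le (nrm 3 (dW Rc1)) Cst /\
    Rbar_le (nrm (7/3) (dX Rc1)) Cst /\
    Rbar_le (nrm (7/3) (dY Rc1)) Cst /\
    Rbar_le (nrm (2/3) (dW Rc2)) Cst /\
    Rbar_le (nrm 2 (dX Rc2)) Cst /\
    Rbar_le (nrm 2 (dY Rc2)) Cst /\
    Rbar_le (nrm (2/3) (dW Rc3)) Cst /\
    Rbar_le (nrm 2 (dX Rc3)) Cst /\
    Rbar_le (nrm 2 (dY Rc3)) Cst.
Proof.
  destruct (J_order rho) as [CJ HJ], (dKdW_order rho) as [CK HK].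
  destruct (R_orders rho CJ) as (Cst & HCst & Hord).
  set (kappa0 := 2 * (1 + tan beta0) * (1 + 2 * Rabs CJ + 2 * Rabs CK) ^ 3).
  assert (Hkappa0 : 0 < kappa0).
  { assert (Ha := tan_gt_0 beta0 Hb0 Hb1). generalize (Rabs_pos CJ) (Rabs_pos CK). intros.
    apply Rmult_lt_0_compat; [lra | apply pow_lt; lra]. }
  exists kappa0; split; [exact Hkappa0 |]. exists Cst; split; [exact HCst |].
  intros kappa Hk Z1 Z2 Z3 HZ nrm.
  assert (HA : forall U, inD beta0 kappa U ->
    admissible rho CJ (Rpower (Cmod U) (1/3)) U (Z1 U) (Z2 U) (Z3 U))
    by (intros U HU; apply (admissible_on_domain beta0 kappa rho CJ CK); auto).
  decompose [and] Hord. unfold nrm.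
  repeat split; (eapply wnorm_le_of_order; [exact HA | eassumption | simpl; field]).
Qed.
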